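(* Let $\epsilon>0$, $R>0$, $\lambda\in C([0,R])$, and let $\mathcal T'=\{(\alpha,\beta):0\le\beta\le\alpha\le 2R,\ \beta\le 2R-\alpha\}$. Define $\bar\lambda=\max_{\rho\in[0,R]}\frac{|\lambda(\rho)|}{4\epsilon}$, $$G_0(\alpha,\beta)=-\int_{\beta/2}^{\alpha/2}\frac{\lambda(\rho)}{2\epsilon}\,d\rho,$$ and for $k\ge1$ $$G_k(\alpha,\beta)=\int_\beta^\alpha\!\!\int_0^\beta\frac{\lambda\left(\frac{\eta-\sigma}{2}\right)}{4\epsilon}G_{k-1}(\eta,\sigma)\,d\sigma\,d\eta+\int_\beta^\alpha\!\!\int_0^\beta\frac{\eta\sigma}{(\eta^2-\sigma^2)^2}G_{k-1}(\eta,\sigma)\,d\sigma\,d\eta.$$ Then $|G_0|\le F_{00}$ on $\mathcal T'$, and for every $n\ge1$ the integrals defining $G_n$ converge absolutely on $\mathcal T'$ and $$|G_n(\alpha,\beta)|\le F_{n0}(\alpha,\beta)+\sum_{i=0}^{n-1}\sum_{j=1}^{n-i}\frac{C_{(n-i)j}}{4^{\,n-i}}F_{ij}(\alpha,\beta)\qquad\text{for all }(\alpha,\beta)\in\mathcal T'.$$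
   Context: For integers $n,k\ge0$ and $0\le\beta<\alpha$, $F_{nk}(\alpha,\beta)=\frac{\bar\lambda^{n+1}\alpha^n\beta^n}{n!(n+1)!}(\alpha-\beta)\frac{\log^k\left(\frac{\alpha+\beta}{\alpha-\beta}\right)}{k!}$, extended continuously by $0$ on the diagonal $\alpha=\beta$. The numbers $C_{ij}$ (Catalan's triangle) are defined by: $C_{11}=1$; $C_{i0}=0$; $C_{ij}=0$ if $j>i$; and $C_{ij}=C_{(i-1)(j-1)}+C_{i(j+1)}$ for all other index pairs ($i\ge2$, $1\le j\le i$). *)

From Stdlib Require Import Reals Lra List Arith ClassicalEpsilon Factorial.
Open Scope R_scope.

(* Value of the Riemann integral of f on [a,b] (Stdlib orientation);
   arbitrary if f is not Riemann integrable there. *)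
Definition RInt (f : R -> R) (a b : R) : R :=
  epsilon (inhabits 0)
    (fun v => exists pr : Riemann_integrable f a b, RiemannInt pr = v).

Definition lim_right0 (g : R -> R) (l : R) : Prop :=
  forall e, 0 < e -> exists d, 0 < d /\
    forall x, 0 < x < d -> Rabs (g x - l) < e.

Definition Lim0 (g : R -> R) : R := epsilon (inhabits 0) (lim_right0 g).

(* The only possible singularity of the integrands below is at the corner
   eta = sigma = beta, which the truncation removes. *)
Definition trunc_int (f : R -> R -> R) (alpha beta d : R) : R :=
  RInt (fun eta => RInt (fun sigma => f eta sigma) 0 beta) (Rmin (beta + d) alpha) alpha.

Definition dint (f : R -> R -> R) (alpha beta : R) : R :=
  Lim0 (trunc_int f alpha beta).

Definition abs_conv (f : R -> R -> R) (alpha beta : R) : Prop :=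
  (forall eta, beta < eta <= alpha ->
     inhabited (Riemann_integrable (fun sigma => f eta sigma) 0 beta) /\
     inhabited (Riemann_integrable (fun sigma => Rabs (f eta sigma)) 0 beta)) /\
  (forall d, 0 < d -> beta + d <= alpha ->
     inhabited (Riemann_integrable (fun eta => RInt (fun sigma => f eta sigma) 0 beta) (beta + d) alpha) /\
     inhabited (Riemann_integrable (fun eta => RInt (fun sigma => Rabs (f eta sigma)) 0 beta) (beta + d) alpha)) /\
  (exists l, lim_right0 (trunc_int (fun eta sigma => Rabs (f eta sigma)) alpha beta) l) /\
  (exists l, lim_right0 (trunc_int f alpha beta) l).

Definition K1 (eps : R) (lam : R -> R) (g : R -> R -> R) (eta sigma : R) : R :=
  lam ((eta - sigma) / 2) / (4 * eps) * g eta sigma.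

Definition K2 (g : R -> R -> R) (eta sigma : R) : R :=
  eta * sigma / (eta ^ 2 - sigma ^ 2) ^ 2 * g eta sigma.

Fixpoint G (eps : R) (lam : R -> R) (k : nat) (alpha beta : R) : R :=
  match k with
  | O => - RInt (fun rho => lam rho / (2 * eps)) (beta / 2) (alpha / 2)
  | S k' => dint (K1 eps lam (G eps lam k')) alpha beta
            + dint (K2 (G eps lam k')) alpha beta
  end.

Definition F (lbar : R) (n k : nat) (alpha beta : R) : R :=
  if Rlt_dec beta alpha then
    lbar ^ (n + 1) * alpha ^ n * beta ^ n / (INR (fact n) * INR (fact (n + 1)))
    * (alpha - beta) * (ln ((alpha + beta) / (alpha - beta))) ^ k / INR (fact k)
  else 0.

Definition inT' (Rr alpha beta : R) : Prop :=
  0 <= beta /\ beta <= alpha /\ alpha <= 2 * Rr /\ beta <= 2 * Rr - alpha.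

Definition cont_on (lam : R -> R) (a b : R) : Prop :=
  forall x, a <= x <= b -> forall e, 0 < e -> exists d, 0 < d /\
    forall y, a <= y <= b -> Rabs (y - x) < d -> Rabs (lam y - lam x) < e.

Definition sumL (s : list nat) (f : nat -> R) : R := fold_right Rplus 0 (map f s).

(* Write B_n for the right-hand side of the estimate. Everything rests on a
   comparison principle for the improper integral of a kernel f dominated by Phi:
   if Phi has closed-form iterated integrals, int_0^b Phi(x,s) ds = P(x,b) and
   int_c^a P(x,b) dx = B(a,b) - B(c,b), and B vanishes at the diagonal with a
   modulus w, then the truncated integrals are Cauchy as the truncation tends
   to 0, so the improper integral converges absolutely, is bounded by B, and is
   uniformly continuous on T'.
   For G_(n+1) the dominating function is (lbar + K2) B_n, and B_(n+1) has
   exactly this mixed derivative: d_y d_x F_ij = lbar F_(i-1)j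
   + 4 K2 (F_i(j-1) - F_i(j-2)), and summation by parts against the Catalan
   recursion turns the K2 terms into K2 B_n. Since F_ij = O(sqrt(alpha - beta))
   near the diagonal, w(t) = M sqrt t is a modulus, and induction on n closes
   the argument. *)

From Pilot Require Import Defs.
From Stdlib Require Import Reals List Lra Lia ClassicalEpsilon Factorial Wf_nat Compare_dec.
From Coquelicot Require Import Coquelicot.
Open Scope R_scope.

(** * Riemann integrals and limits at 0+ *)

Lemma RInt_Riemann_eq f a b : ex_RInt f a b -> Defs.RInt f a b = RInt f a b.
Proof.
  intros Hf. pose proof (ex_RInt_Reals_0 _ _ _ Hf) as pr.
  assert (E : exists v, exists pr : Riemann_integrable f a b, RiemannInt pr = v)
    by (exists (RiemannInt pr); exists pr; reflexivity).
  unfold Defs.RInt. destruct (epsilon_spec (inhabits 0) _ E) as [pr' <-].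
  symmetry. apply RInt_Reals.
Qed.

Lemma RInt_Riemann_ext f g a b :
  (forall x, Rmin a b < x < Rmax a b -> f x = g x) -> ex_RInt g a b ->
  Defs.RInt f a b = RInt g a b.
Proof.
  intros E Hg. assert (Hf : ex_RInt f a b).
  { apply ex_RInt_ext with g; auto. intros; symmetry; auto. }
  rewrite RInt_Riemann_eq by auto. apply RInt_ext; auto.
Qed.

Lemma ex_RInt_Chasles_1R (g : R -> R) a b c : a <= b <= c -> ex_RInt g a c -> ex_RInt g a b.
Proof. apply (ex_RInt_Chasles_1 (V := R_CompleteNormedModule)). Qed.

Lemma ex_RInt_Chasles_2R (g : R -> R) a b c : a <= b <= c -> ex_RInt g a c -> ex_RInt g b c.
Proof. apply (ex_RInt_Chasles_2 (V := R_CompleteNormedModule)). Qed.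

Lemma RInt_ChaslesR (g : R -> R) a b c : ex_RInt g a b -> ex_RInt g b c ->
  RInt g a b + RInt g b c = RInt g a c.
Proof. apply (RInt_Chasles (V := R_CompleteNormedModule)). Qed.

Definition clamp a b x := Rmax a (Rmin b x).

Lemma clamp_in a b x : a <= b -> a <= clamp a b x <= b.
Proof. intros; unfold clamp, Rmax, Rmin; repeat destruct Rle_dec; lra. Qed.

Lemma clamp_id a b x : a <= x <= b -> clamp a b x = x.
Proof. intros; unfold clamp, Rmax, Rmin; repeat destruct Rle_dec; lra. Qed.

Lemma clamp_lip a b x y : a <= b -> Rabs (clamp a b y - clamp a b x) <= Rabs (y - x).
Proof.
  intros; unfold clamp, Rmax, Rmin; repeat destruct Rle_dec;
    unfold Rabs; repeat destruct Rcase_abs; lra.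
Qed.

Lemma cont_on_clamp f a b : a <= b -> cont_on f a b -> forall z, continuous (fun x => f (clamp a b x)) z.
Proof.
  intros Hab Hc z. apply continuity_pt_filterlim. intros e He.
  destruct (Hc (clamp a b z) (clamp_in a b z Hab) e He) as [d [Hd P]].
  exists d; split; auto. intros y [_ Hy].
  apply P; [apply clamp_in; auto|]. eapply Rle_lt_trans; [apply clamp_lip; auto|exact Hy].
Qed.

Lemma cont_on_ex_RInt f a b : a <= b -> cont_on f a b -> ex_RInt f a b.
Proof.
  intros Hab Hc.
  apply ex_RInt_ext with (f := fun x => f (clamp a b x)).
  { intros x Hx. rewrite Rmin_left, Rmax_right in Hx by lra. rewrite clamp_id; lra. }
  apply (ex_RInt_continuous (V := R_CompleteNormedModule)). intros z _.
  apply cont_on_clamp; auto.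
Qed.

Lemma cont_on_unif f a b : a <= b -> cont_on f a b ->
  forall e, 0 < e -> exists d, 0 < d /\ forall x y, a <= x <= b -> a <= y <= b ->
    Rabs (x - y) < d -> Rabs (f x - f y) < e.
Proof.
  intros Hab Hc e He.
  assert (U : uniform_continuity (fun x => f (clamp a b x)) (fun c => a <= c <= b)).
  { apply Heine; [apply compact_P3|]. intros x _.
    apply continuity_pt_filterlim, cont_on_clamp; auto. }
  destruct (U (mkposreal e He)) as [[d Hd] P]. exists d; split; auto.
  intros x y Hx Hy Hxy. specialize (P x y Hx Hy Hxy). simpl in P.
  rewrite !clamp_id in P by auto. exact P.
Qed.

Lemma lim_right0_unique g l1 l2 : lim_right0 g l1 -> lim_right0 g l2 -> l1 = l2.
Proof.
  intros H1 H2. destruct (Req_dec l1 l2) as [|Hne]; [auto|].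
  set (e := Rabs (l1 - l2) / 2).
  assert (He : 0 < e) by (unfold e; apply Rdiv_lt_0_compat; [apply Rabs_pos_lt|]; lra).
  destruct (H1 e He) as [d1 [Hd1 P1]]. destruct (H2 e He) as [d2 [Hd2 P2]].
  set (x := Rmin d1 d2 / 2).
  assert (Hx1 : 0 < x < d1) by (unfold x, Rmin; destruct Rle_dec; lra).
  assert (Hx2 : 0 < x < d2) by (unfold x, Rmin; destruct Rle_dec; lra).
  specialize (P1 x Hx1). specialize (P2 x Hx2).
  assert (Rabs (l1 - l2) <= Rabs (g x - l1) + Rabs (g x - l2)).
  { replace (l1 - l2) with (-(g x - l1) + (g x - l2)) by ring.
    eapply Rle_trans; [apply Rabs_triang|]. rewrite Rabs_Ropp; lra. }
  unfold e in *; lra.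
Qed.

Lemma Lim0_eq g l : lim_right0 g l -> Lim0 g = l.
Proof.
  intros H. apply (lim_right0_unique g); auto.
  apply (epsilon_spec (inhabits 0) (lim_right0 g)). eauto.
Qed.

Lemma lim_right0_modulus (g w : R -> R) :
  (forall x y, 0 <= x <= y -> w x <= w y) ->
  (forall e, 0 < e -> exists d, 0 < d /\ w d < e) ->
  (forall d d', 0 < d' < d -> Rabs (g d - g d') <= w d) ->
  exists l, lim_right0 g l /\ forall d, 0 < d -> Rabs (g d - l) <= w d.
Proof.
  intros Hm Hl Hc.
  set (u := fun n : nat => g (/ INR (S n))).
  assert (Hu : forall n, 0 < / INR (S n)) by (intros; apply Rinv_0_lt_compat, lt_0_INR; lia).
  assert (Hle : forall n N, (n >= N)%nat -> (N > 0)%nat -> / INR (S n) <= / INR N)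
    by (intros; apply Rinv_le_contravar; [apply lt_0_INR; lia|apply le_INR; lia]).
  assert (Cu : Cauchy_crit u).
  { intros e He. destruct (Hl (e / 2) ltac:(lra)) as [d [Hd Hwd]].
    destruct (archimed_cor1 d Hd) as [K [HK HK0]].
    exists K. intros n m Hn Hm'. unfold Rdist, u.
    pose proof (Hle n K Hn HK0). pose proof (Hle m K Hm' HK0).
    pose proof (Hc d (/ INR (S n)) ltac:(split; [apply Hu|lra])).
    pose proof (Hc d (/ INR (S m)) ltac:(split; [apply Hu|lra])).
    replace (g (/ INR (S n)) - g (/ INR (S m))) with
      (-(g d - g (/ INR (S n))) + (g d - g (/ INR (S m)))) by ring.
    eapply Rle_lt_trans; [apply Rabs_triang|]. rewrite Rabs_Ropp. lra. }
  destruct (Rcomplete.R_complete u Cu) as [l Hlu].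
  assert (Hb : forall d, 0 < d -> Rabs (g d - l) <= w d).
  { intros d Hd. apply Rnot_lt_le. intros Hlt.
    set (e := Rabs (g d - l) - w d).
    destruct (Hlu e ltac:(unfold e; lra)) as [N HN].
    destruct (archimed_cor1 d Hd) as [K [HK HK0]].
    set (n := (N + K)%nat).
    pose proof (Hle n K ltac:(unfold n; lia) HK0).
    specialize (HN n ltac:(unfold n; lia)). unfold Rdist, u in HN.
    pose proof (Hc d (/ INR (S n)) ltac:(split; [apply Hu|lra])).
    assert (Rabs (g d - l) <= Rabs (g d - g (/ INR (S n))) + Rabs (g (/ INR (S n)) - l)).
    { replace (g d - l) with ((g d - g (/ INR (S n))) + (g (/ INR (S n)) - l)) by ring.
      apply Rabs_triang. }
    unfold e in *; lra. }
  exists l; split; auto.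
  intros e He. destruct (Hl e He) as [d [Hd Hwd]]. exists d; split; auto.
  intros x Hx. eapply Rle_lt_trans; [apply Hb; lra|].
  apply Rle_lt_trans with (w d); [apply Hm; lra|auto].
Qed.

(** * Improper double integrals under a closed-form majorant *)

Definition uc_on (S : R -> R -> Prop) (f : R -> R -> R) : Prop :=
  forall e, 0 < e -> exists dl, 0 < dl /\ forall x y x' y', S x y -> S x' y' ->
    Rabs (x - x') < dl -> Rabs (y - y') < dl -> Rabs (f x y - f x' y') < e.

Definition bounded_on (S : R -> R -> Prop) (f : R -> R -> R) : Prop :=
  exists M, forall x y, S x y -> Rabs (f x y) <= M.

Definition off_diag (Rr d x y : R) : Prop := inT' Rr x y /\ d <= x - y.

(* [Phi] dominates the integrand; [P] and [B] are its inner and iterated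
   integrals in closed form, and [B] vanishes at the diagonal with modulus [w]. *)
Record majorant (Rr : R) (Phi P B : R -> R -> R) (w : R -> R) : Prop := {
  majorant_Rr : 0 < Rr;
  majorant_inner : forall x b, inT' Rr x b -> b < x ->
    is_RInt (fun s => Phi x s) 0 b (P x b);
  majorant_outer : forall a b c, inT' Rr a b -> b < c <= a ->
    is_RInt (fun x => P x b) c a (B a b - B c b);
  majorant_ge0 : forall a b, inT' Rr a b -> 0 <= B a b;
  majorant_diag : forall a b, inT' Rr a b -> B a b <= w (a - b);
  modulus_mono : forall x y, 0 <= x <= y -> w x <= w y;
  modulus_ge0 : forall x, 0 <= x -> 0 <= w x;
  modulus_vanish : forall e, 0 < e -> exists d, 0 < d /\ w d < e }.

Record dominated (Rr : R) (Phi f : R -> R -> R) : Prop := {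
  dominated_uc : forall d, 0 < d -> uc_on (off_diag Rr d) f;
  dominated_le : forall x s, inT' Rr x s -> s < x -> Rabs (f x s) <= Phi x s;
  dominated_bnd : forall d, 0 < d -> bounded_on (off_diag Rr d) f }.

Lemma dominated_abs Rr Phi f : dominated Rr Phi f -> dominated Rr Phi (fun x s => Rabs (f x s)).
Proof.
  intros [Hu Hle Hb]; split.
  - intros d Hd e He. destruct (Hu d Hd e He) as [dl [Hdl P]]. exists dl; split; auto.
    intros. eapply Rle_lt_trans; [apply Rabs_triang_inv2|]. auto.
  - intros. rewrite Rabs_Rabsolu. auto.
  - intros d Hd. destruct (Hb d Hd) as [M HM]. exists M. intros. rewrite Rabs_Rabsolu. auto.
Qed.

Lemma inT'_shrink Rr a b c : inT' Rr a b -> b <= c <= a -> inT' Rr c b.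
Proof. unfold inT'; lra. Qed.

Definition inner_int (f : R -> R -> R) x b := RInt (fun s => f x s) 0 b.

Definition trunc (f : R -> R -> R) a b d : R :=
  if Rle_dec (b + d) a then RInt (fun x => inner_int f x b) (b + d) a else 0.

Section Dominated.

Variables (Rr : R) (Phi f : R -> R -> R).
Hypothesis Hf : dominated Rr Phi f.

Lemma inner_ex x b : inT' Rr x b -> b < x -> ex_RInt (fun s => f x s) 0 b.
Proof.
  intros Hx Hb. apply cont_on_ex_RInt; [unfold inT' in *; lra|].
  intros y Hy e He.
  destruct (dominated_uc _ _ _ Hf (x - b) ltac:(lra) e He) as [dl [Hdl P0]].
  exists dl; split; auto. intros z Hz Hzy.
  apply P0; unfold off_diag, inT' in *; try lra.
  rewrite Rminus_diag, Rabs_R0; lra.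
Qed.

Lemma outer_cont a b d : inT' Rr a b -> 0 < d -> b + d <= a ->
  cont_on (fun x => inner_int f x b) (b + d) a.
Proof.
  intros Hab Hd Hbd x Hx e He.
  assert (H0b : 0 <= b) by (unfold inT' in *; lra).
  destruct (dominated_uc _ _ _ Hf d Hd (e / (b + 1))) as [dl [Hdl P]].
  { apply Rdiv_lt_0_compat; lra. }
  exists dl; split; auto. intros y Hy Hyx. unfold inner_int.
  assert (Ey : ex_RInt (fun s => f y s) 0 b) by (apply inner_ex; unfold inT' in *; lra).
  assert (Ex : ex_RInt (fun s => f x s) 0 b) by (apply inner_ex; unfold inT' in *; lra).
  rewrite <- (RInt_minus (V := R_CompleteNormedModule)) by auto.
  apply Rle_lt_trans with ((b - 0) * (e / (b + 1))).
  - apply abs_RInt_le_const; auto.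
    + apply (ex_RInt_minus (V := R_NormedModule)); auto.
    + intros t Ht. left. apply P; unfold off_diag, inT' in *; try lra.
      rewrite Rminus_diag, Rabs_R0; lra.
  - rewrite Rminus_0_r. apply Rlt_le_trans with ((b + 1) * (e / (b + 1))).
    + apply Rmult_lt_compat_r; [apply Rdiv_lt_0_compat|]; lra.
    + right; field; lra.
Qed.

Lemma outer_ex a b c : inT' Rr a b -> b < c <= a -> ex_RInt (fun x => inner_int f x b) c a.
Proof.
  intros Hab Hc. apply cont_on_ex_RInt; [lra|].
  replace c with (b + (c - b)) by ring. apply outer_cont; auto; lra.
Qed.

Lemma trunc_int_eq a b d : inT' Rr a b -> 0 < d -> trunc_int f a b d = trunc f a b d.
Proof.
  intros Hab Hd. unfold trunc_int, trunc. destruct Rle_dec.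
  - rewrite Rmin_left by lra. apply RInt_Riemann_ext.
    + intros x Hx. rewrite Rmin_left, Rmax_right in Hx by lra.
      apply RInt_Riemann_eq, inner_ex; [eapply inT'_shrink; eauto|]; lra.
    + apply outer_ex; auto; lra.
  - rewrite Rmin_right by lra. rewrite RInt_Riemann_eq by apply ex_RInt_point.
    apply (RInt_point (V := R_CompleteNormedModule)).
Qed.

End Dominated.

Section DominatedIntegral.

Variables (Rr : R) (Phi P B : R -> R -> R) (w : R -> R).
Hypothesis HK : majorant Rr Phi P B w.

Section Integrand.

Variable f : R -> R -> R.
Hypothesis Hf : dominated Rr Phi f.

Lemma inner_le x b : inT' Rr x b -> b < x -> Rabs (inner_int f x b) <= P x b.
Proof.
  intros Hx Hb. unfold inner_int.
  assert (H0b : 0 <= b) by (unfold inT' in *; lra).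
  pose proof (majorant_inner _ _ _ _ _ HK x b Hx Hb) as HP.
  eapply Rle_trans; [apply abs_RInt_le; auto; apply (inner_ex Rr Phi); auto|].
  rewrite <- (is_RInt_unique _ _ _ _ HP).
  apply RInt_le; auto.
  - apply (inner_ex Rr Phi (fun x s => Rabs (f x s))); auto. apply dominated_abs; auto.
  - eexists; exact HP.
  - intros s Hs. apply (dominated_le _ _ _ Hf); unfold inT' in *; lra.
Qed.

Lemma outer_le a b c : inT' Rr a b -> b < c <= a ->
  Rabs (RInt (fun x => inner_int f x b) c a) <= B a b - B c b.
Proof.
  intros Hab Hc.
  pose proof (majorant_outer _ _ _ _ _ HK a b c Hab Hc) as HB.
  assert (Hcont : cont_on (fun x => inner_int f x b) (b + (c - b)) a)
    by (apply (outer_cont Rr Phi); auto; lra).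
  replace (b + (c - b)) with c in Hcont by ring.
  eapply Rle_trans; [apply abs_RInt_le; [lra|]; apply (outer_ex Rr Phi); auto|].
  rewrite <- (is_RInt_unique _ _ _ _ HB).
  apply RInt_le; [lra| | |].
  - apply cont_on_ex_RInt; [lra|]. intros y Hy e He.
    destruct (Hcont y Hy e He) as [dl [Hdl Hy']].
    exists dl; split; auto. intros z Hz Hzy.
    eapply Rle_lt_trans; [apply Rabs_triang_inv2|]. apply Hy'; auto.
  - eexists; exact HB.
  - intros x Hx. apply inner_le; [eapply inT'_shrink; eauto|]; lra.
Qed.

Lemma trunc_le a b d : inT' Rr a b -> 0 < d -> Rabs (trunc f a b d) <= B a b.
Proof.
  intros Hab Hd. unfold trunc. destruct Rle_dec.
  - eapply Rle_trans; [apply outer_le; auto; lra|].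
    pose proof (majorant_ge0 _ _ _ _ _ HK (b + d) b ltac:(eapply inT'_shrink; eauto; lra)). lra.
  - rewrite Rabs_R0. eapply majorant_ge0; eauto.
Qed.

Lemma trunc_cauchy a b d d' : inT' Rr a b -> 0 < d' < d ->
  Rabs (trunc f a b d - trunc f a b d') <= w d.
Proof.
  intros Hab Hd.
  unfold trunc. destruct (Rle_dec (b + d) a); destruct (Rle_dec (b + d') a); try lra;
    try assert (Hge0 : 0 <= B (b + d') b)
      by (eapply majorant_ge0; eauto; eapply inT'_shrink; eauto; lra).
  - assert (Hi : inT' Rr (b + d) b) by (eapply inT'_shrink; eauto; lra).
    rewrite <- (RInt_ChaslesR _ (b + d') (b + d) a).
    2, 3: apply (outer_ex Rr Phi); auto; lra.
    replace (RInt (fun x => inner_int f x b) (b + d) a - _)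
      with (- RInt (fun x => inner_int f x b) (b + d') (b + d)) by ring.
    rewrite Rabs_Ropp. eapply Rle_trans; [apply outer_le; auto; lra|].
    pose proof (majorant_diag _ _ _ _ _ HK _ _ Hi). replace (b + d - b) with d in * by ring. lra.
  - rewrite Rminus_0_l, Rabs_Ropp. eapply Rle_trans; [apply outer_le; auto; lra|].
    pose proof (majorant_diag _ _ _ _ _ HK _ _ Hab).
    pose proof (modulus_mono _ _ _ _ _ HK (a - b) d ltac:(unfold inT' in *; lra)). lra.
  - rewrite Rminus_0_r, Rabs_R0. apply (modulus_ge0 _ _ _ _ _ HK); lra.
Qed.

Lemma dint_approx a b : inT' Rr a b ->
  lim_right0 (trunc_int f a b) (dint f a b) /\
  forall d, 0 < d -> Rabs (trunc f a b d - dint f a b) <= w d.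
Proof.
  intros Hab.
  destruct (lim_right0_modulus (trunc f a b) w (modulus_mono _ _ _ _ _ HK)
              (modulus_vanish _ _ _ _ _ HK)) as [l [Hl Hw]].
  { intros d d' Hd. apply trunc_cauchy; auto. }
  assert (Hl' : lim_right0 (trunc_int f a b) l).
  { intros e He. destruct (Hl e He) as [d [Hd Hlim]]. exists d; split; auto.
    intros x Hx. rewrite (trunc_int_eq Rr Phi) by (auto; lra). auto. }
  unfold dint. rewrite (Lim0_eq _ _ Hl'). auto.
Qed.

Lemma dint_le a b : inT' Rr a b -> Rabs (dint f a b) <= B a b.
Proof.
  intros Hab. destruct (dint_approx a b Hab) as [_ Hw].
  apply Rnot_lt_le; intros Hlt.
  destruct (modulus_vanish _ _ _ _ _ HK (Rabs (dint f a b) - B a b) ltac:(lra)) as [d [Hd Hwd]].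
  pose proof (Hw d Hd). pose proof (trunc_le a b d Hab Hd).
  assert (Rabs (dint f a b) <= Rabs (trunc f a b d - dint f a b) + Rabs (trunc f a b d)).
  { replace (dint f a b) with (-(trunc f a b d - dint f a b) + trunc f a b d) at 1 by ring.
    eapply Rle_trans; [apply Rabs_triang|]. rewrite Rabs_Ropp; lra. }
  lra.
Qed.

Lemma inner_int_bound d M x b : inT' Rr x b -> 0 < d -> b + d <= x ->
  (forall x s, off_diag Rr d x s -> Rabs (f x s) <= M) ->
  Rabs (inner_int f x b) <= b * M.
Proof.
  intros Hx Hd Hbx HM. unfold inner_int. replace (b * M) with ((b - 0) * M) by ring.
  apply abs_RInt_le_const; [unfold inT' in *; lra|apply (inner_ex Rr Phi); auto; lra|].
  intros t Ht. apply HM. unfold off_diag, inT' in *; lra.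
Qed.

Lemma inner_int_diff_bound d M x b0 b : inT' Rr x b -> 0 <= b0 <= b -> 0 < d -> b + d <= x ->
  (forall x s, off_diag Rr d x s -> Rabs (f x s) <= M) ->
  Rabs (inner_int f x b - inner_int f x b0) <= (b - b0) * M.
Proof.
  intros Hx Hb Hd Hbx HM. unfold inner_int.
  assert (Hex : ex_RInt (fun s => f x s) 0 b) by (apply (inner_ex Rr Phi); auto; lra).
  assert (E : RInt (fun s => f x s) 0 b0 + RInt (fun s => f x s) b0 b = RInt (fun s => f x s) 0 b).
  { apply RInt_ChaslesR; [apply ex_RInt_Chasles_1R with b|apply ex_RInt_Chasles_2R with 0];
      auto; lra. }
  replace (RInt (fun s => f x s) 0 b - RInt (fun s => f x s) 0 b0)
    with (RInt (fun s => f x s) b0 b) by lra.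
  apply abs_RInt_le_const; [lra|apply ex_RInt_Chasles_2R with 0; auto; lra|].
  intros t Ht. apply HM. unfold off_diag, inT' in *; lra.
Qed.

Lemma trunc_diff_mono d M a b a0 b0 : inT' Rr a b -> inT' Rr a0 b0 ->
  a0 <= a -> b0 <= b -> 0 < d -> b + d <= a -> b0 + d <= a0 -> 0 <= M ->
  (forall x s, off_diag Rr d x s -> Rabs (f x s) <= M) ->
  Rabs (trunc f a b d - trunc f a0 b0 d) <= 4 * Rr * M * ((a - a0) + (b - b0)).
Proof.
  intros Hab Ha0 Haa Hbb Hd Hbd Hbd0 HM HfM.
  unfold trunc. destruct (Rle_dec (b + d) a); [|lra]. destruct (Rle_dec (b0 + d) a0); [|lra].
  set (H0 := fun x => inner_int f x b0). set (H1 := fun x => inner_int f x b).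
  assert (Hb0 : 0 <= b0) by (unfold inT' in *; lra).
  assert (Hab0 : inT' Rr a b0) by (unfold inT' in *; lra).
  assert (E0 : ex_RInt H0 (b0 + d) a) by (apply (outer_ex Rr Phi); auto; lra).
  assert (E01 : ex_RInt H0 (b0 + d) (b + d)) by (apply ex_RInt_Chasles_1R with a; auto; lra).
  assert (E02 : ex_RInt H0 (b + d) a) by (apply ex_RInt_Chasles_2R with (b0 + d); auto; lra).
  assert (E03 : ex_RInt H0 (b0 + d) a0) by (apply ex_RInt_Chasles_1R with a; auto; lra).
  assert (E04 : ex_RInt H0 a0 a) by (apply ex_RInt_Chasles_2R with (b0 + d); auto; lra).
  assert (E1 : ex_RInt H1 (b + d) a) by (apply (outer_ex Rr Phi); auto; lra).
  assert (C1 : RInt H0 (b0 + d) (b + d) + RInt H0 (b + d) a = RInt H0 (b0 + d) a)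
    by (apply RInt_ChaslesR; auto).
  assert (C2 : RInt H0 (b0 + d) a0 + RInt H0 a0 a = RInt H0 (b0 + d) a)
    by (apply RInt_ChaslesR; auto).
  assert (C3 : RInt H1 (b + d) a - RInt H0 (b + d) a = RInt (fun x => H1 x - H0 x) (b + d) a)
    by (symmetry; apply (RInt_minus (V := R_CompleteNormedModule)); auto).
  assert (I1 : Rabs (RInt (fun x => H1 x - H0 x) (b + d) a) <= (a - (b + d)) * ((b - b0) * M)).
  { apply abs_RInt_le_const; [lra|apply (ex_RInt_minus (V := R_NormedModule)); auto|].
    intros x Hx. apply (inner_int_diff_bound d); auto; [eapply inT'_shrink; eauto|]; lra. }
  assert (I2 : Rabs (RInt H0 a0 a) <= (a - a0) * (b0 * M)).
  { apply abs_RInt_le_const; [lra|auto|].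
    intros x Hx. apply (inner_int_bound d); auto; [eapply inT'_shrink; eauto|]; lra. }
  assert (I3 : Rabs (RInt H0 (b0 + d) (b + d)) <= (b - b0) * (b0 * M)).
  { replace (b - b0) with (b + d - (b0 + d)) by ring.
    apply abs_RInt_le_const; [lra|auto|].
    intros x Hx. apply (inner_int_bound d); auto; [eapply inT'_shrink; eauto|]; lra. }
  fold H1 H0.
  replace (RInt H1 (b + d) a - RInt H0 (b0 + d) a0) with
    (RInt (fun x => H1 x - H0 x) (b + d) a + RInt H0 a0 a - RInt H0 (b0 + d) (b + d)) by lra.
  unfold Rminus at 1. eapply Rle_trans; [apply Rabs_triang|]. rewrite Rabs_Ropp.
  eapply Rle_trans; [apply Rplus_le_compat_r; apply Rabs_triang|].
  assert (a - (b + d) <= 2 * Rr /\ b0 <= 2 * Rr) by (unfold inT' in *; lra).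
  assert (0 <= (b - b0) * M /\ 0 <= (a - a0) * M) by (split; apply Rmult_le_pos; lra).
  nra.
Qed.

Lemma trunc_lipschitz d M a b a' b' : inT' Rr a b -> inT' Rr a' b' -> 0 < d -> 0 <= M ->
  Rmax b b' + d <= Rmin a a' ->
  (forall x s, off_diag Rr d x s -> Rabs (f x s) <= M) ->
  Rabs (trunc f a b d - trunc f a' b' d) <= 4 * Rr * M * (Rabs (a - a') + Rabs (b - b')).
Proof.
  intros Hab Hab' Hd HM Hgap HfM.
  set (a0 := Rmin a a'). set (b0 := Rmin b b').
  assert (Hm : a0 <= a /\ a0 <= a' /\ b0 <= b /\ b0 <= b' /\ b0 + d <= a0 /\ b + d <= a /\ b' + d <= a')
    by (unfold a0, b0, Rmin, Rmax in *; repeat destruct Rle_dec; lra).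
  assert (H0 : inT' Rr a0 b0) by (unfold a0, b0, Rmin, inT' in *; repeat destruct Rle_dec; lra).
  assert (Hs : (a - a0) + (b - b0) + ((a' - a0) + (b' - b0)) = Rabs (a - a') + Rabs (b - b'))
    by (unfold a0, b0, Rmin, Rabs; repeat destruct Rle_dec; repeat destruct Rcase_abs; lra).
  pose proof (trunc_diff_mono d M a b a0 b0 Hab H0 ltac:(lra) ltac:(lra) Hd ltac:(lra) ltac:(lra) HM HfM).
  pose proof (trunc_diff_mono d M a' b' a0 b0 Hab' H0 ltac:(lra) ltac:(lra) Hd ltac:(lra) ltac:(lra) HM HfM).
  replace (trunc f a b d - trunc f a' b' d)
    with ((trunc f a b d - trunc f a0 b0 d) - (trunc f a' b' d - trunc f a0 b0 d)) by ring.
  eapply Rle_trans; [apply Rabs_triang|]. rewrite Rabs_Ropp, <- Hs. lra.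
Qed.

Lemma dint_diff_near a b a' b' t : inT' Rr a b -> inT' Rr a' b' -> a - b <= t -> a' - b' <= t ->
  Rabs (dint f a b - dint f a' b') <= 2 * w t.
Proof.
  intros Hp Hq Ht Ht'.
  assert (Hnear : forall a b, inT' Rr a b -> a - b <= t -> Rabs (dint f a b) <= w t).
  { intros x y Hxy Hxyt. eapply Rle_trans; [apply dint_le; auto|].
    eapply Rle_trans; [eapply majorant_diag; eauto|].
    apply (modulus_mono _ _ _ _ _ HK). unfold inT' in Hxy; lra. }
  pose proof (Hnear a b Hp Ht). pose proof (Hnear a' b' Hq Ht').
  unfold Rminus. eapply Rle_trans; [apply Rabs_triang|]. rewrite Rabs_Ropp. lra.
Qed.

Lemma dint_diff_far d M a b a' b' : inT' Rr a b -> inT' Rr a' b' -> 0 < d -> 0 <= M ->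
  Rmax b b' + d <= Rmin a a' ->
  (forall x s, off_diag Rr d x s -> Rabs (f x s) <= M) ->
  Rabs (dint f a b - dint f a' b') <= 2 * w d + 4 * Rr * M * (Rabs (a - a') + Rabs (b - b')).
Proof.
  intros Hp Hq Hd HM Hgap HfM.
  destruct (dint_approx a b Hp) as [_ Tp]. destruct (dint_approx a' b' Hq) as [_ Tq].
  pose proof (Tp d Hd). pose proof (Tq d Hd).
  pose proof (trunc_lipschitz d M a b a' b' Hp Hq Hd HM Hgap HfM).
  replace (dint f a b - dint f a' b') with
    (-(trunc f a b d - dint f a b) + (trunc f a b d - trunc f a' b' d)
     + (trunc f a' b' d - dint f a' b')) by ring.
  eapply Rle_trans; [apply Rabs_triang|].
  eapply Rle_trans; [apply Rplus_le_compat_r, Rabs_triang|].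
  rewrite Rabs_Ropp. lra.
Qed.

(* Near the diagonal both values are small; away from it the truncations at a
   fixed depth [d] are Lipschitz and approximate [dint] uniformly. *)
Lemma dint_uc : uc_on (inT' Rr) (dint f).
Proof.
  intros e He.
  destruct (modulus_vanish _ _ _ _ _ HK (e / 4) ltac:(lra)) as [d1 [Hd1 Hw1]].
  set (d := d1 / 3). assert (Hd : 0 < d) by (unfold d; lra).
  destruct (dominated_bnd _ _ _ Hf d Hd) as [M0 HM0].
  set (M := Rabs M0). assert (HM : 0 <= M) by apply Rabs_pos.
  assert (HfM : forall x s, off_diag Rr d x s -> Rabs (f x s) <= M)
    by (intros; eapply Rle_trans; [apply HM0; auto|apply RRle_abs]).
  assert (HRM : 0 <= Rr * M) by (apply Rmult_le_pos; [pose proof (majorant_Rr _ _ _ _ _ HK)|]; lra).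
  set (dl := Rmin (d / 2) (e / (4 * (8 * Rr * M + 1)))).
  assert (Hdl : 0 < dl /\ dl <= d / 2 /\ dl <= e / (4 * (8 * Rr * M + 1))).
  { split; [|split; [apply Rmin_l|apply Rmin_r]].
    unfold dl, Rmin; destruct Rle_dec; [lra|]. apply Rdiv_lt_0_compat; lra. }
  exists dl; split; [tauto|].
  intros a b a' b' Hp Hq Ha Hb.
  assert (Hw : w d <= w d1) by (apply (modulus_mono _ _ _ _ _ HK); unfold d; lra).
  destruct (Rle_dec (a - b) (2 * d)) as [Near|Far1];
    [|destruct (Rle_dec (a' - b') (2 * d)) as [Near|Far2]].
  1, 2: eapply Rle_lt_trans; [apply (dint_diff_near a b a' b' d1); auto|lra];
    unfold d, Rabs in *; repeat destruct Rcase_abs; lra.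
  eapply Rle_lt_trans; [apply (dint_diff_far d M); auto|].
  { unfold Rmin, Rmax, Rabs in *; repeat destruct Rle_dec; repeat destruct Rcase_abs; lra. }
  assert (Hsmall : 4 * Rr * M * (Rabs (a - a') + Rabs (b - b')) <= e / 4).
  { set (K := 8 * Rr * M + 1) in *.
    assert (HK1 : 8 * Rr * M / K <= 1).
    { apply Rmult_le_reg_r with K; [unfold K; lra|].
      unfold Rdiv. rewrite Rmult_assoc, Rinv_l by (unfold K; lra). unfold K; lra. }
    apply Rle_trans with (8 * Rr * M * (e / (4 * K))); [nra|].
    replace (8 * Rr * M * (e / (4 * K))) with (e / 4 * (8 * Rr * M / K)) by (field; unfold K; lra).
    nra. }
  lra.
Qed.

End Integrand.

Lemma dominated_abs_conv f a b : dominated Rr Phi f -> inT' Rr a b -> abs_conv f a b.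
Proof.
  intros Hf Hab. pose proof (dominated_abs _ _ _ Hf) as Hfa.
  assert (Hinner : forall g, dominated Rr Phi g -> forall x, b < x <= a ->
    ex_RInt (fun s => g x s) 0 b)
    by (intros g Hg x Hx; apply (inner_ex Rr Phi); [auto|eapply inT'_shrink; eauto; lra|lra]).
  assert (Houter : forall g, dominated Rr Phi g -> forall d, 0 < d -> b + d <= a ->
    ex_RInt (fun x => Defs.RInt (fun s => g x s) 0 b) (b + d) a).
  { intros g Hg d Hd Hbd. apply ex_RInt_ext with (fun x => inner_int g x b).
    - intros x Hx. rewrite Rmin_left, Rmax_right in Hx by lra.
      symmetry. apply RInt_Riemann_eq, Hinner; auto; lra.
    - apply (outer_ex Rr Phi); auto; lra. }
  split; [|split; [|split]].
  - intros x Hx. split; constructor; apply ex_RInt_Reals_0;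
      [apply (Hinner f)|apply (Hinner (fun x s => Rabs (f x s)))]; auto.
  - intros d Hd Hbd. split; constructor; apply ex_RInt_Reals_0;
      [apply (Houter f)|apply (Houter (fun x s => Rabs (f x s)))]; auto.
  - eexists. apply (dint_approx _ Hfa a b Hab).
  - eexists. apply (dint_approx _ Hf a b Hab).
Qed.

Lemma dint_plus f1 f2 a b : dominated Rr Phi f1 -> dominated Rr Phi f2 ->
  dominated Rr Phi (fun x s => f1 x s + f2 x s) -> inT' Rr a b ->
  dint (fun x s => f1 x s + f2 x s) a b = dint f1 a b + dint f2 a b.
Proof.
  intros H1 H2 H12 Hab. unfold dint at 1. apply Lim0_eq.
  destruct (dint_approx _ H1 a b Hab) as [L1 _]. destruct (dint_approx _ H2 a b Hab) as [L2 _].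
  intros e He. destruct (L1 (e/2) ltac:(lra)) as [d1 [Hd1 Q1]].
  destruct (L2 (e/2) ltac:(lra)) as [d2 [Hd2 Q2]].
  exists (Rmin d1 d2); split; [unfold Rmin; destruct Rle_dec; lra|].
  intros x Hx. assert (x < d1 /\ x < d2) by (unfold Rmin in *; destruct Rle_dec; lra).
  specialize (Q1 x ltac:(lra)). specialize (Q2 x ltac:(lra)).
  rewrite (trunc_int_eq Rr Phi) in Q1, Q2 |- * by (auto; lra).
  assert (Hsplit : trunc (fun x s => f1 x s + f2 x s) a b x = trunc f1 a b x + trunc f2 a b x).
  { unfold trunc. destruct Rle_dec as [Hr|Hr]; [|ring].
    rewrite <- (RInt_plus (V := R_CompleteNormedModule)) by (apply (outer_ex Rr Phi); auto; lra).
    apply RInt_ext. intros y Hy. rewrite Rmin_left, Rmax_right in Hy by lra.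
    unfold inner_int. apply (RInt_plus (V := R_CompleteNormedModule));
      apply (inner_ex Rr Phi); auto; (eapply inT'_shrink; eauto; lra) || lra. }
  rewrite Hsplit.
  replace (trunc f1 a b x + trunc f2 a b x - (dint f1 a b + dint f2 a b)) with
    ((trunc f1 a b x - dint f1 a b) + (trunc f2 a b x - dint f2 a b)) by ring.
  eapply Rle_lt_trans; [apply Rabs_triang|]. lra.
Qed.

End DominatedIntegral.

Lemma uc_on_sub S T f : (forall x y, S x y -> T x y) -> uc_on T f -> uc_on S f.
Proof. intros HST H e He. destruct (H e He) as [dl [Hdl P]]. exists dl; split; auto. Qed.

Lemma bounded_on_sub S T f : (forall x y, S x y -> T x y) -> bounded_on T f -> bounded_on S f.
Proof. intros HST [M HM]. exists M; auto. Qed.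

Lemma uc_on_ext S f g : (forall x y, S x y -> f x y = g x y) -> uc_on S f -> uc_on S g.
Proof.
  intros E H e He. destruct (H e He) as [d [Hd P]]. exists d; split; auto.
  intros. rewrite <- !E by auto. auto.
Qed.

Lemma uc_on_fst S : uc_on S (fun x y => x).
Proof. intros e He. exists e; split; auto. Qed.

Lemma uc_on_snd S : uc_on S (fun x y => y).
Proof. intros e He. exists e; split; auto. Qed.

Lemma uc_on_const S c : uc_on S (fun x y => c).
Proof. intros e He. exists 1; split; [lra|]. intros. rewrite Rminus_diag, Rabs_R0; auto. Qed.

Lemma uc_on_plus S f g : uc_on S f -> uc_on S g -> uc_on S (fun x y => f x y + g x y).
Proof.
  intros Hf Hg e He. destruct (Hf (e/2) ltac:(lra)) as [d1 [Hd1 P1]].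
  destruct (Hg (e/2) ltac:(lra)) as [d2 [Hd2 P2]].
  exists (Rmin d1 d2); split; [unfold Rmin; destruct Rle_dec; lra|].
  intros x y x' y' Hs Hs' Hx Hy.
  assert (Rabs (x - x') < d1 /\ Rabs (y - y') < d1 /\ Rabs (x - x') < d2 /\ Rabs (y - y') < d2)
    by (unfold Rmin in *; destruct Rle_dec; lra).
  replace (f x y + g x y - (f x' y' + g x' y')) with ((f x y - f x' y') + (g x y - g x' y')) by ring.
  eapply Rle_lt_trans; [apply Rabs_triang|].
  pose proof (P1 x y x' y' Hs Hs' ltac:(tauto) ltac:(tauto)).
  pose proof (P2 x y x' y' Hs Hs' ltac:(tauto) ltac:(tauto)). lra.
Qed.

Lemma bounded_on_plus S f g : bounded_on S f -> bounded_on S g ->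
  bounded_on S (fun x y => f x y + g x y).
Proof.
  intros [M1 H1] [M2 H2]. exists (M1 + M2). intros.
  eapply Rle_trans; [apply Rabs_triang|]. pose proof (H1 x y H). pose proof (H2 x y H). lra.
Qed.

Lemma bounded_on_mult S f g : bounded_on S f -> bounded_on S g ->
  bounded_on S (fun x y => f x y * g x y).
Proof.
  intros [M1 H1] [M2 H2]. exists (Rabs M1 * Rabs M2). intros. rewrite Rabs_mult.
  apply Rmult_le_compat; try apply Rabs_pos.
  - eapply Rle_trans; [apply H1; auto|apply RRle_abs].
  - eapply Rle_trans; [apply H2; auto|apply RRle_abs].
Qed.

Lemma uc_on_mult S f g : uc_on S f -> uc_on S g -> bounded_on S f -> bounded_on S g ->
  uc_on S (fun x y => f x y * g x y).
Proof.
  intros Hf Hg [M1 HM1] [M2 HM2] e He.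
  set (A1 := Rabs M1 + 1). set (A2 := Rabs M2 + 1).
  assert (HA1 : 0 < A1) by (unfold A1; pose proof (Rabs_pos M1); lra).
  assert (HA2 : 0 < A2) by (unfold A2; pose proof (Rabs_pos M2); lra).
  destruct (Hf (e / (2 * A2)) ltac:(apply Rdiv_lt_0_compat; lra)) as [d1 [Hd1 P1]].
  destruct (Hg (e / (2 * A1)) ltac:(apply Rdiv_lt_0_compat; lra)) as [d2 [Hd2 P2]].
  exists (Rmin d1 d2); split; [unfold Rmin; destruct Rle_dec; lra|].
  intros x y x' y' Hs Hs' Hx Hy.
  assert (Rabs (x - x') < d1 /\ Rabs (y - y') < d1 /\ Rabs (x - x') < d2 /\ Rabs (y - y') < d2)
    by (unfold Rmin in *; destruct Rle_dec; lra).
  pose proof (P1 x y x' y' Hs Hs' ltac:(tauto) ltac:(tauto)) as Q1.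
  pose proof (P2 x y x' y' Hs Hs' ltac:(tauto) ltac:(tauto)) as Q2.
  replace (f x y * g x y - f x' y' * g x' y') with
    (f x y * (g x y - g x' y') + g x' y' * (f x y - f x' y')) by ring.
  eapply Rle_lt_trans; [apply Rabs_triang|]. rewrite !Rabs_mult.
  assert (B1 : Rabs (f x y) <= A1)
    by (unfold A1; eapply Rle_trans; [apply HM1; auto|]; pose proof (RRle_abs M1); lra).
  assert (B2 : Rabs (g x' y') <= A2)
    by (unfold A2; eapply Rle_trans; [apply HM2; auto|]; pose proof (RRle_abs M2); lra).
  assert (Rabs (f x y) * Rabs (g x y - g x' y') <= A1 * (e / (2 * A1)))
    by (apply Rmult_le_compat; try apply Rabs_pos; lra).
  assert (Rabs (g x' y') * Rabs (f x y - f x' y') < A2 * (e / (2 * A2))).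
  { apply Rle_lt_trans with (A2 * Rabs (f x y - f x' y')).
    - apply Rmult_le_compat_r; [apply Rabs_pos|lra].
    - apply Rmult_lt_compat_l; lra. }
  replace (A1 * (e / (2 * A1))) with (e / 2) in * by (field; lra).
  replace (A2 * (e / (2 * A2))) with (e / 2) in * by (field; lra). lra.
Qed.

Lemma uc_on_inv S f c : uc_on S f -> 0 < c -> (forall x y, S x y -> c <= Rabs (f x y)) ->
  uc_on S (fun x y => / f x y).
Proof.
  intros Hf Hc Hb e He.
  destruct (Hf (e * (c * c)) ltac:(apply Rmult_lt_0_compat; [|apply Rmult_lt_0_compat]; lra))
    as [d [Hd P]].
  exists d; split; auto. intros x y x' y' Hs Hs' Hx Hy.
  pose proof (Hb x y Hs). pose proof (Hb x' y' Hs').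
  assert (N1 : f x y <> 0) by (intro E; rewrite E, Rabs_R0 in *; lra).
  assert (N2 : f x' y' <> 0) by (intro E; rewrite E, Rabs_R0 in *; lra).
  replace (/ f x y - / f x' y') with ((f x' y' - f x y) / (f x y * f x' y')) by (field; auto).
  unfold Rdiv. rewrite Rabs_mult, Rabs_inv, Rabs_mult.
  assert (Hcc : c * c <= Rabs (f x y) * Rabs (f x' y')) by (apply Rmult_le_compat; lra).
  assert (Q : Rabs (f x' y' - f x y) < e * (c * c)) by (rewrite Rabs_minus_sym; apply P; auto).
  apply Rmult_lt_reg_r with (Rabs (f x y) * Rabs (f x' y')); [nra|].
  rewrite Rmult_assoc, Rinv_l by nra. rewrite Rmult_1_r.
  apply Rlt_le_trans with (e * (c * c)); auto. apply Rmult_le_compat_l; lra.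
Qed.

Definition K1_coef eps lam (x y : R) := lam ((x - y) / 2) / (4 * eps).
Definition K2_coef (x y : R) := x * y / (x ^ 2 - y ^ 2) ^ 2.

Lemma K1_coef_uc eps lam Rr : 0 < Rr -> 0 < eps -> cont_on lam 0 Rr ->
  uc_on (inT' Rr) (K1_coef eps lam).
Proof.
  intros HR He Hc e Hee.
  destruct (cont_on_unif lam 0 Rr ltac:(lra) Hc (e * (4 * eps)) ltac:(apply Rmult_lt_0_compat; lra))
    as [d [Hd P]].
  exists d; split; auto. intros x y x' y' Hs Hs' Hx Hy. unfold K1_coef.
  replace (lam ((x - y) / 2) / (4 * eps) - lam ((x' - y') / 2) / (4 * eps)) with
    ((lam ((x - y) / 2) - lam ((x' - y') / 2)) / (4 * eps)) by (field; lra).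
  unfold Rdiv. rewrite Rabs_mult, Rabs_inv, (Rabs_right (4 * eps)) by lra.
  apply Rmult_lt_reg_r with (4 * eps); [lra|]. rewrite Rmult_assoc, Rinv_l, Rmult_1_r by lra.
  apply P; unfold inT' in *; try lra.
  replace ((x - y) / 2 - (x' - y') / 2) with (((x - x') - (y - y')) / 2) by field.
  unfold Rabs in *; repeat destruct Rcase_abs; lra.
Qed.

Lemma K1_coef_le eps lam Rr L : 0 < eps ->
  (forall r, 0 <= r <= Rr -> Rabs (lam r) / (4 * eps) <= L) ->
  forall x y, inT' Rr x y -> Rabs (K1_coef eps lam x y) <= L.
Proof.
  intros He HL x y Hs. unfold K1_coef, Rdiv.
  rewrite Rabs_mult, Rabs_inv, (Rabs_right (4 * eps)) by lra.
  apply HL. unfold inT' in *; lra.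
Qed.

Lemma K2_denom_ge Rr d x y : 0 < d -> off_diag Rr d x y -> d ^ 4 <= Rabs ((x ^ 2 - y ^ 2) ^ 2).
Proof.
  intros Hd [Hs Hxy]. unfold inT' in Hs.
  assert (P1 : d * d <= (x - y) * (x + y)) by (apply Rmult_le_compat; lra).
  rewrite Rabs_right by (apply Rle_ge, pow2_ge_0).
  replace (x ^ 2 - y ^ 2) with ((x - y) * (x + y)) by ring.
  replace (d ^ 4) with ((d * d) ^ 2) by ring.
  apply pow_incr. split; [nra|lra].
Qed.

Lemma K2_coef_bounded Rr d : 0 < d -> bounded_on (off_diag Rr d) K2_coef.
Proof.
  intros Hd. unfold K2_coef, Rdiv. apply bounded_on_mult.
  - exists (2 * Rr * (2 * Rr)). intros x y [Hs _]. unfold inT' in Hs. rewrite Rabs_mult.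
    rewrite !Rabs_right by lra. apply Rmult_le_compat; lra.
  - exists (/ d ^ 4). intros x y H. rewrite Rabs_inv. apply Rinv_le_contravar; [apply pow_lt; auto|].
    eapply K2_denom_ge; eauto.
Qed.

Lemma K2_coef_uc Rr d : 0 < d -> uc_on (off_diag Rr d) K2_coef.
Proof.
  intros Hd. unfold K2_coef, Rdiv.
  set (S := off_diag Rr d).
  assert (Bx : bounded_on S (fun x y => x)).
  { exists (2 * Rr). intros x y [Hs _]. unfold inT' in Hs. rewrite Rabs_right; lra. }
  assert (By : bounded_on S (fun x y => y)).
  { exists (2 * Rr). intros x y [Hs _]. unfold inT' in Hs. rewrite Rabs_right; lra. }
  assert (Bm1 : bounded_on S (fun x y => -1))
    by (exists 1; intros; unfold Rabs; destruct Rcase_abs; lra).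
  assert (Bdiff : bounded_on S (fun x y => x * x + (-1) * (y * y)))
    by (apply bounded_on_plus; repeat apply bounded_on_mult; auto).
  assert (Udiff : uc_on S (fun x y => x * x + (-1) * (y * y))).
  { apply uc_on_plus; apply uc_on_mult;
      auto using uc_on_fst, uc_on_snd, uc_on_const, uc_on_mult, bounded_on_mult. }
  assert (Uden : uc_on S (fun x y => (x ^ 2 - y ^ 2) ^ 2)).
  { apply uc_on_ext with (fun x y => (x * x + (-1) * (y * y)) * (x * x + (-1) * (y * y))).
    - intros; ring.
    - apply uc_on_mult; auto. }
  apply uc_on_mult.
  - apply uc_on_mult; auto using uc_on_fst, uc_on_snd.
  - apply uc_on_inv with (d ^ 4); auto; [apply pow_lt; auto|]. intros; eapply K2_denom_ge; eauto.
  - apply bounded_on_mult; auto.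
  - exists (/ d ^ 4). intros x y H. rewrite Rabs_inv. apply Rinv_le_contravar; [apply pow_lt; auto|].
    eapply K2_denom_ge; eauto.
Qed.

Lemma K2_coef_ge0 Rr x y : inT' Rr x y -> y < x -> 0 <= K2_coef x y.
Proof.
  intros Hs Hxy. unfold inT' in Hs. unfold K2_coef, Rdiv. apply Rmult_le_pos; [nra|].
  left. apply Rinv_0_lt_compat, pow_lt. nra.
Qed.

Definition step_majorant L (Bg : R -> R -> R) x s := (L + K2_coef x s) * Bg x s.

Section RecursionStep.

Variables (Rr eps L : R) (lam : R -> R) (g Bg : R -> R -> R).
Hypotheses (HR : 0 < Rr) (Heps : 0 < eps) (Hlam : cont_on lam 0 Rr)
  (HL : forall r, 0 <= r <= Rr -> Rabs (lam r) / (4 * eps) <= L) (HL0 : 0 <= L)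
  (Hg_uc : uc_on (inT' Rr) g) (Hg_le : forall x y, inT' Rr x y -> Rabs (g x y) <= Bg x y)
  (Hg_bnd : bounded_on (inT' Rr) g).

Let off_diag_inT' d x y : off_diag Rr d x y -> inT' Rr x y.
Proof. intros [H _]; exact H. Qed.

Let Bg_ge0 x y : inT' Rr x y -> 0 <= Bg x y.
Proof. intros; eapply Rle_trans; [apply Rabs_pos|apply Hg_le; auto]. Qed.

Let K1_le x s : inT' Rr x s -> Rabs (K1 eps lam g x s) <= L * Bg x s.
Proof.
  intros Hs. change (K1 eps lam g x s) with (K1_coef eps lam x s * g x s).
  rewrite Rabs_mult. apply Rmult_le_compat; try apply Rabs_pos; auto.
  eapply K1_coef_le; eauto.
Qed.

Let K2_le x s : inT' Rr x s -> s < x -> Rabs (K2 g x s) <= K2_coef x s * Bg x s.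
Proof.
  intros Hs Hxs. change (K2 g x s) with (K2_coef x s * g x s).
  pose proof (K2_coef_ge0 Rr x s Hs Hxs).
  rewrite Rabs_mult, (Rabs_right (K2_coef x s)) by lra.
  apply Rmult_le_compat_l; auto.
Qed.

Lemma K1_dominated : dominated Rr (step_majorant L Bg) (K1 eps lam g).
Proof.
  split.
  - intros d Hd. apply uc_on_mult.
    + apply uc_on_sub with (inT' Rr); [apply off_diag_inT'|]. apply K1_coef_uc; auto.
    + apply uc_on_sub with (inT' Rr); [apply off_diag_inT'|]. auto.
    + exists L. intros x y Hs. eapply K1_coef_le; eauto.
    + apply bounded_on_sub with (inT' Rr); [apply off_diag_inT'|]. auto.
  - intros x s Hs Hxs. unfold step_majorant. rewrite Rmult_plus_distr_r.
    pose proof (K1_le x s Hs). pose proof (K2_coef_ge0 Rr x s Hs Hxs).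
    pose proof (Bg_ge0 x s Hs). nra.
  - intros d Hd. apply (bounded_on_mult _ (K1_coef eps lam) g).
    + exists L. intros x y Hs. eapply K1_coef_le; eauto.
    + apply bounded_on_sub with (inT' Rr); [apply off_diag_inT'|]. auto.
Qed.

Lemma K2_dominated : dominated Rr (step_majorant L Bg) (K2 g).
Proof.
  split.
  - intros d Hd. apply uc_on_mult.
    + apply K2_coef_uc; auto.
    + apply uc_on_sub with (inT' Rr); [apply off_diag_inT'|]. auto.
    + apply K2_coef_bounded; auto.
    + apply bounded_on_sub with (inT' Rr); [apply off_diag_inT'|]. auto.
  - intros x s Hs Hxs. unfold step_majorant. rewrite Rmult_plus_distr_r.
    pose proof (K2_le x s Hs Hxs). pose proof (Bg_ge0 x s Hs).
    pose proof (Rmult_le_pos _ _ HL0 (Bg_ge0 x s Hs)). lra.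
  - intros d Hd. apply (bounded_on_mult _ K2_coef g).
    + apply K2_coef_bounded; auto.
    + apply bounded_on_sub with (inT' Rr); [apply off_diag_inT'|]. auto.
Qed.

Lemma K12_dominated :
  dominated Rr (step_majorant L Bg) (fun x s => K1 eps lam g x s + K2 g x s).
Proof.
  destruct K1_dominated as [U1 _ B1]. destruct K2_dominated as [U2 _ B2]. split.
  - intros d Hd. apply uc_on_plus; auto.
  - intros x s Hs Hxs. unfold step_majorant. rewrite Rmult_plus_distr_r.
    pose proof (K1_le x s Hs). pose proof (K2_le x s Hs Hxs).
    eapply Rle_trans; [apply Rabs_triang|]. lra.
  - intros d Hd. apply bounded_on_plus; auto.
Qed.

End RecursionStep.

(** * Catalan sums *)

Lemma sumL_app l1 l2 f : sumL (l1 ++ l2) f = sumL l1 f + sumL l2 f.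
Proof. unfold sumL. induction l1; simpl; [ring|]. rewrite IHl1; ring. Qed.

Lemma sumL_ext l f g : (forall x, In x l -> f x = g x) -> sumL l f = sumL l g.
Proof.
  unfold sumL. induction l; intros H; [reflexivity|]. simpl.
  rewrite H by (left; auto). rewrite IHl; auto. intros; apply H; right; auto.
Qed.

Lemma sumL_plus l f g : sumL l (fun x => f x + g x) = sumL l f + sumL l g.
Proof. unfold sumL. induction l; simpl; [ring|]. rewrite IHl; ring. Qed.

Lemma sumL_minus l f g : sumL l (fun x => f x - g x) = sumL l f - sumL l g.
Proof. unfold sumL. induction l; simpl; [ring|]. rewrite IHl; ring. Qed.

Lemma sumL_scal l c f : sumL l (fun x => c * f x) = c * sumL l f.
Proof. unfold sumL. induction l; simpl; [ring|]. rewrite IHl; ring. Qed.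

Lemma sumL_zero l : sumL l (fun _ => 0) = 0.
Proof. unfold sumL. induction l; simpl; [ring|]. rewrite IHl; ring. Qed.

Lemma sumL_ge0 l f : (forall x, In x l -> 0 <= f x) -> 0 <= sumL l f.
Proof.
  unfold sumL. induction l; intros H; simpl; [lra|].
  apply Rplus_le_le_0_compat; [apply H; left; auto|apply IHl; intros; apply H; right; auto].
Qed.

Lemma sumL_cons a l f : sumL (a :: l) f = f a + sumL l f.
Proof. reflexivity. Qed.

Lemma sumL_shift s k f : sumL (seq (S s) k) f = sumL (seq s k) (fun i => f (S i)).
Proof. rewrite <- seq_shift. unfold sumL. rewrite map_map. reflexivity. Qed.

Lemma sumL_last s k f : sumL (seq s (S k)) f = sumL (seq s k) f + f (s + k)%nat.
Proof. rewrite seq_S, sumL_app. unfold sumL at 2; simpl. ring. Qed.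

Definition SumF_tail (C T : nat -> nat -> R) (n : nat) : R :=
  sumL (seq 0 n) (fun i => sumL (seq 1 (n - i)) (fun j => C (n - i)%nat j / 4 ^ (n - i) * T i j)).

Definition SumF (C T : nat -> nat -> R) (n : nat) : R := T n 0%nat + SumF_tail C T n.

Definition is_catalan (C : nat -> nat -> R) : Prop :=
  C 1%nat 1%nat = 1 /\ (forall i, C i 0%nat = 0) /\ (forall i j, (i < j)%nat -> C i j = 0) /\
  (forall i j, (2 <= i)%nat -> (1 <= j <= i)%nat ->
     C i j = C (i - 1)%nat (j - 1)%nat + C i (j + 1)%nat).

Lemma catalan_ge0 C : is_catalan C -> forall i j, 0 <= C i j.
Proof.
  intros [C11 [C0 [Cz Cr]]] i. induction i as [i IH] using lt_wf_ind.
  destruct (le_lt_dec 2 i) as [Hi|Hi].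
  - assert (Hk : forall k j, (i + 1 - j = k)%nat -> 0 <= C i j).
    { intros k. induction k as [|k IHk]; intros j Hk.
      - rewrite Cz by lia. lra.
      - destruct j as [|j]; [rewrite C0; lra|].
        destruct (le_lt_dec (S j) i) as [Hj|Hj]; [|rewrite Cz by lia; lra].
        rewrite Cr by lia. apply Rplus_le_le_0_compat; [apply IH|apply IHk]; lia. }
    intros j; apply (Hk (i + 1 - j)%nat); auto.
  - intros j. destruct i as [|[|i]]; [|destruct j as [|[|j]]|lia].
    + destruct j; [rewrite C0|rewrite Cz by lia]; lra.
    + rewrite C0; lra.
    + rewrite C11; lra.
    + rewrite Cz by lia; lra.
Qed.

Lemma SumF_ge0 C T n : (forall i j, 0 <= C i j) -> (forall i j, 0 <= T i j) -> 0 <= SumF C T n.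
Proof.
  intros HC HT. unfold SumF, SumF_tail. apply Rplus_le_le_0_compat; auto.
  apply sumL_ge0; intros i _. apply sumL_ge0; intros j _.
  apply Rmult_le_pos; auto. unfold Rdiv. apply Rmult_le_pos; auto.
  left. apply Rinv_0_lt_compat, pow_lt; lra.
Qed.

Definition back_diff (phi : nat -> R) (j : nat) : R :=
  match j with O => 0 | S j' => phi j' - match j' with O => 0 | S j'' => phi j'' end end.

(* Summation by parts against the recursion [C k j = C (k-1) (j-1) + C k (j+1)]. *)
Lemma catalan_back_diff C phi k : is_catalan C -> (1 <= k)%nat ->
  4 * sumL (seq 1 k) (fun j => C k j / 4 ^ k * back_diff phi j) =
  (if Nat.eq_dec k 1 then phi 0%nat
   else sumL (seq 1 (k - 1)) (fun j => C (k - 1)%nat j / 4 ^ (k - 1) * phi j)).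
Proof.
  intros [C11 [C0 [Cz Cr]]] Hk.
  rewrite sumL_shift.
  assert (E1 : sumL (seq 0 k) (fun i => C k (S i) / 4 ^ k * back_diff phi (S i)) =
    sumL (seq 0 k) (fun i => C k (S i) / 4 ^ k * phi i) -
    sumL (seq 0 k) (fun i => C k (S (S i)) / 4 ^ k * phi i)).
  { destruct k as [|k]; [lia|].
    transitivity (sumL (seq 0 (S k)) (fun i => C (S k) (S i) / 4 ^ S k * phi i) -
      sumL (seq 0 (S k)) (fun i => C (S k) (S i) / 4 ^ S k * match i with O => 0 | S i' => phi i' end)).
    { rewrite <- sumL_minus. apply sumL_ext; intros; simpl back_diff; ring. }
    f_equal.
    rewrite (sumL_last 0 k (fun i => C (S k) (S (S i)) / 4 ^ S k * phi i)).
    rewrite (Cz (S k) (S (S (0 + k)))) by lia.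
    simpl seq at 1. rewrite sumL_cons, sumL_shift. unfold Rdiv; ring. }
  rewrite E1, <- sumL_minus.
  destruct (Nat.eq_dec k 1) as [->|Hk1].
  - unfold sumL; simpl. rewrite C11, (Cz 1%nat 2%nat) by lia. field.
  - rewrite <- sumL_scal.
    destruct k as [|k]; [lia|]. replace (S k - 1)%nat with k by lia.
    rewrite (sumL_ext _ _ (fun i => C k i / 4 ^ k * phi i)).
    + destruct k as [|k]; [lia|]. change (seq 0 (S (S k))) with (0%nat :: seq 1 (S k)).
      rewrite sumL_cons, C0. unfold Rdiv; ring.
    + intros i Hi. apply in_seq in Hi.
      rewrite (Cr (S k) (S i)) by lia. replace (S k - 1)%nat with k by lia.
      replace (S i - 1)%nat with i by lia. replace (S i + 1)%nat with (S (S i)) by lia.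
      simpl pow. field. apply pow_nonzero; lra.
Qed.

Lemma SumF_tail_ext C T T' n : (forall i j, T i j = T' i j) -> SumF_tail C T n = SumF_tail C T' n.
Proof.
  intros E. unfold SumF_tail. apply sumL_ext; intros. apply sumL_ext; intros. rewrite E; auto.
Qed.

Lemma SumF_tail_plus C T T' n :
  SumF_tail C (fun i j => T i j + T' i j) n = SumF_tail C T n + SumF_tail C T' n.
Proof.
  unfold SumF_tail. rewrite <- sumL_plus. apply sumL_ext; intros.
  rewrite <- sumL_plus. apply sumL_ext; intros. ring.
Qed.

Lemma SumF_tail_scal C T c n : SumF_tail C (fun i j => c * T i j) n = c * SumF_tail C T n.
Proof.
  unfold SumF_tail. rewrite <- sumL_scal. apply sumL_ext; intros.
  rewrite <- sumL_scal. apply sumL_ext; intros. ring.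
Qed.

Lemma SumF_tail_shift C T m :
  SumF_tail C (fun i j => match i with O => 0 | S i' => T i' j end) (S m) = SumF_tail C T m.
Proof.
  unfold SumF_tail. change (seq 0 (S m)) with (0%nat :: seq 1 m).
  rewrite sumL_cons, (sumL_ext _ _ (fun _ => 0)) by (intros; ring).
  rewrite sumL_zero, Rplus_0_l, sumL_shift. reflexivity.
Qed.

Lemma SumF_tail_back_diff C T m : is_catalan C ->
  4 * SumF_tail C (fun i j => back_diff (T i) j) (S m) = SumF C T m.
Proof.
  intros HC. unfold SumF_tail, SumF. rewrite <- sumL_scal.
  rewrite (sumL_ext _ _ (fun i => if Nat.eq_dec (S m - i) 1 then T i 0%nat else
      sumL (seq 1 (S m - i - 1)) (fun j => C (S m - i - 1)%nat j / 4 ^ (S m - i - 1) * T i j))).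
  2: { intros i Hi. apply in_seq in Hi. apply catalan_back_diff; auto. lia. }
  rewrite sumL_last. simpl (0 + m)%nat.
  replace (S m - m)%nat with 1%nat by lia. destruct (Nat.eq_dec 1 1); [|lia].
  rewrite Rplus_comm. f_equal. apply sumL_ext. intros i Hi. apply in_seq in Hi.
  destruct (Nat.eq_dec (S m - i) 1); [lia|]. replace (S m - i - 1)%nat with (m - i)%nat by lia.
  reflexivity.
Qed.

Lemma SumF_back_diff C L kv (T dT : nat -> nat -> R) m : is_catalan C ->
  (forall i j, dT i j = (match i with O => 0 | S i' => L * T i' j end) + 4 * kv * back_diff (T i) j) ->
  SumF C dT (S m) = (L + kv) * SumF C T m.
Proof.
  intros HC HdT. unfold SumF at 1.
  rewrite (SumF_tail_ext _ _ _ _ HdT), SumF_tail_plus, HdT.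
  rewrite (SumF_tail_ext C _ (fun i j => L * match i with O => 0 | S i' => T i' j end))
    by (intros [|i] j; ring).
  rewrite (SumF_tail_ext C (fun i j => 4 * kv * back_diff (T i) j)
             (fun i j => kv * (4 * back_diff (T i) j))) by (intros; ring).
  rewrite !SumF_tail_scal, SumF_tail_shift, <- SumF_tail_scal, SumF_tail_scal.
  rewrite SumF_tail_back_diff by auto. unfold SumF. simpl back_diff. ring.
Qed.

(** * The functions F_ij and their derivatives *)

Definition Fcoef L i := L ^ (i + 1) / (INR (fact i) * INR (fact (i + 1))).
Definition inv_fact j := / INR (fact j).

Definition Fterm L i j x y :=
  Fcoef L i * x ^ i * y ^ i * (x - y) * ln ((x + y) / (x - y)) ^ j * inv_fact j.

Definition log_pred j x y :=
  match j with O => 0 | S j' => ln ((x + y) / (x - y)) ^ j' * inv_fact j' end.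

Definition dFx L i j x y := Fcoef L i *
  (INR i * x ^ (pred i) * y ^ i * (x - y) * ln ((x + y) / (x - y)) ^ j * inv_fact j
   + x ^ i * y ^ i * ln ((x + y) / (x - y)) ^ j * inv_fact j
   - 2 * y * x ^ i * y ^ i / (x + y) * log_pred j x y).

(* The mixed derivative of [Fterm L i j]: the [lambda] kernel lowers [i],
   the singular kernel [K2] lowers [j]. *)
Definition dFxy L i j x y :=
  (match i with O => 0 | S i' => L * Fterm L i' j x y end) +
  4 * K2_coef x y * back_diff (fun j => Fterm L i j x y) j.

Lemma F_off_diag L i j a b : b < a -> F L i j a b = Fterm L i j a b.
Proof.
  intros H. unfold F, Fterm, Fcoef, inv_fact. destruct Rlt_dec; [|lra].
  pose proof (INR_fact_neq_0 i). pose proof (INR_fact_neq_0 (i + 1)). pose proof (INR_fact_neq_0 j).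
  field. auto.
Qed.

Lemma F_on_diag L i j a b : ~ b < a -> F L i j a b = 0.
Proof. intros H. unfold F. destruct Rlt_dec; [lra|auto]. Qed.

Lemma ln_ratio_ge0 a b : 0 <= b < a -> 0 <= ln ((a + b) / (a - b)).
Proof.
  intros H. rewrite <- ln_1. apply ln_le; [lra|].
  apply Rmult_le_reg_r with (a - b); [lra|]. unfold Rdiv. rewrite Rmult_assoc, Rinv_l by lra. lra.
Qed.

Lemma F_ge0 L i j a b : 0 <= L -> 0 <= b <= a -> 0 <= F L i j a b.
Proof.
  intros HL Hab. destruct (Rlt_dec b a) as [H|H]; [|rewrite F_on_diag; lra].
  rewrite F_off_diag by auto. unfold Fterm, Fcoef, inv_fact.
  pose proof (INR_fact_lt_0 i). pose proof (INR_fact_lt_0 (i + 1)). pose proof (INR_fact_lt_0 j).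
  pose proof (ln_ratio_ge0 a b ltac:(lra)).
  repeat apply Rmult_le_pos; try apply pow_le; try lra;
    try (left; apply Rinv_0_lt_compat; try apply Rmult_lt_0_compat; auto).
Qed.

Lemma inv_fact_S j : inv_fact j = inv_fact (S j) * INR (S j).
Proof.
  unfold inv_fact. rewrite fact_simpl, mult_INR. pose proof (INR_fact_neq_0 j).
  assert (INR (S j) <> 0) by (apply not_0_INR; lia). field; auto.
Qed.

Lemma Fcoef_S L i : Fcoef L (S i) = L * Fcoef L i / (INR (S i) * INR (S (S i))).
Proof.
  unfold Fcoef. replace (S i + 1)%nat with (S (i + 1)) by lia.
  rewrite (fact_simpl (i + 1)), (fact_simpl i), !mult_INR.
  replace (S (i + 1)) with (S (S i)) by lia.
  pose proof (INR_fact_neq_0 i). pose proof (INR_fact_neq_0 (i + 1)).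
  assert (INR (S i) <> 0) by (apply not_0_INR; lia).
  assert (INR (S (S i)) <> 0) by (apply not_0_INR; lia).
  replace (S (S i)) with (S (i + 1)) at 1 by lia. simpl pow. field. auto.
Qed.

Ltac derive_side :=
  repeat split; try lra; try (apply Rmult_lt_0_compat; [lra|apply Rinv_0_lt_compat; lra]).

(* [auto_derive] leaves [ln ((x+y) * / (x + - y))], equalities in an abstract
   ring, and [INR (S k)] unfolded to a [match]; fold all three back. *)
Ltac normalize_derive :=
  match goal with |- @eq _ ?a ?b => change (@eq R a b) end;
  repeat match goal with |- context [ln ((?x + ?y) * / (?x + - ?y))] =>
    change (ln ((x + y) * / (x + - y))) with (ln ((x + y) / (x - y))) end;
  repeat match goal with |- context [match ?k with 0%nat => 1 | S _ => INR ?k + 1 end] =>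
    change (match k with 0%nat => 1 | S _ => INR k + 1 end) with (INR (S k)) end.

Lemma is_derive_Fterm_x L i j x y : 0 <= y < x ->
  is_derive (fun x => Fterm L i j x y) x (dFx L i j x y).
Proof.
  intros H. unfold Fterm, dFx, log_pred.
  destruct j as [|j]; auto_derive; try (derive_side; fail); normalize_derive.
  rewrite (inv_fact_S j), S_INR, <- !tech_pow_Rmult. field. lra.
Qed.

Lemma is_derive_dFx_y L i j x y : 0 <= y < x ->
  is_derive (fun y => dFx L i j x y) y (dFxy L i j x y).
Proof.
  intros H. unfold dFx, log_pred, dFxy, back_diff, K2_coef, Fterm.
  assert (Hd : x ^ 2 - y ^ 2 <> 0) by nra.
  assert (Hd' : x * x - y * y <> 0) by nra.
  destruct j as [|[|j]]; destruct i as [|i]; auto_derive; try (derive_side; fail); normalize_derive.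
  all: repeat match goal with |- context [inv_fact ?k] =>
         match goal with
         | |- context [inv_fact (S k)] => rewrite (inv_fact_S k)
         | |- context [inv_fact (S (S k))] => rewrite (inv_fact_S k)
         end end.
  all: repeat match goal with |- context [Fcoef ?L (S ?k)] => rewrite (Fcoef_S L k) end.
  all: rewrite <- ?tech_pow_Rmult, ?S_INR; simpl INR.
  all: repeat match goal with |- context [INR ?k] =>
         lazymatch goal with _ : 0 <= INR k |- _ => fail | _ => pose proof (pos_INR k) end end.
  all: field; repeat split; lra.
Qed.

Lemma continuous_dFx L i j x y : 0 <= y < x -> continuous (fun x => dFx L i j x y) x.
Proof.
  intros H. apply (ex_derive_continuous (K := R_AbsRing) (V := R_NormedModule)).
  unfold dFx, log_pred. destruct j as [|j]; auto_derive; derive_side.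
Qed.

Lemma continuous_dFxy L i j x y : 0 <= y < x -> continuous (fun y => dFxy L i j x y) y.
Proof.
  intros H. apply (ex_derive_continuous (K := R_AbsRing) (V := R_NormedModule)).
  unfold dFxy, back_diff, K2_coef, Fterm.
  assert (Hd : x ^ 2 - y ^ 2 <> 0) by nra.
  assert (Hd' : x * x - y * y <> 0) by nra.
  destruct j as [|[|j]]; destruct i as [|i]; auto_derive; derive_side.
  all: replace (x * (x * 1) + - (y * (y * 1))) with (x * x - y * y) by ring;
    apply Rmult_integral_contrapositive; split; [auto|rewrite Rmult_1_r; auto].
Qed.

Lemma dFx_at_0 L i j x : 0 < x -> (i <> 0 \/ j <> 0)%nat -> dFx L i j x 0 = 0.
Proof.
  intros Hx Hij. unfold dFx, log_pred.
  replace ((x + 0) / (x - 0)) with 1 by (field; lra). rewrite ln_1.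
  destruct j as [|j].
  - destruct i as [|i]; [destruct Hij as [Hh|Hh]; exfalso; apply Hh; reflexivity|].
    simpl pow. unfold Rdiv; ring.
  - rewrite (pow_ne_zero (S j)) by lia. unfold Rdiv; ring.
Qed.

Lemma is_derive_sumL (l : list nat) (g : nat -> R -> R) dg x :
  (forall i, In i l -> is_derive (g i) x (dg i)) ->
  is_derive (fun t => sumL l (fun i => g i t)) x (sumL l dg).
Proof.
  unfold sumL. induction l as [|a l IH]; intros H; simpl.
  - apply (is_derive_const (K := R_AbsRing) 0 x).
  - apply (is_derive_plus (K := R_AbsRing) (V := R_NormedModule) (g a)
             (fun t => fold_right Rplus 0 (map (fun i => g i t) l))).
    + apply H; left; auto.
    + apply IH. intros; apply H; right; auto.
Qed.

Lemma continuous_sumL (l : list nat) (g : nat -> R -> R) x :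
  (forall i, In i l -> continuous (g i) x) ->
  continuous (fun t => sumL l (fun i => g i t)) x.
Proof.
  unfold sumL. induction l as [|a l IH]; intros H; simpl.
  - apply continuous_const.
  - apply (continuous_plus (g a) (fun t => fold_right Rplus 0 (map (fun i => g i t) l))).
    + apply H; left; auto.
    + apply IH. intros; apply H; right; auto.
Qed.

Lemma is_derive_SumF C n (T : nat -> nat -> R -> R) dT x :
  (forall i j, is_derive (T i j) x (dT i j)) ->
  is_derive (fun t => SumF C (fun i j => T i j t) n) x (SumF C dT n).
Proof.
  intros H. unfold SumF, SumF_tail.
  apply (is_derive_plus (K := R_AbsRing) (V := R_NormedModule) (T n 0%nat)); auto.
  apply (is_derive_sumL _ (fun i t => sumL (seq 1 (n - i))
           (fun j => C (n - i)%nat j / 4 ^ (n - i) * T i j t))).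
  intros i _. apply (is_derive_sumL _ (fun j t => C (n - i)%nat j / 4 ^ (n - i) * T i j t)).
  intros j _. apply (is_derive_scal (T i j)). auto.
Qed.

Lemma continuous_SumF C n (T : nat -> nat -> R -> R) x :
  (forall i j, continuous (T i j) x) ->
  continuous (fun t => SumF C (fun i j => T i j t) n) x.
Proof.
  intros H. unfold SumF, SumF_tail.
  apply (continuous_plus (T n 0%nat)); auto.
  apply (continuous_sumL _ (fun i t => sumL (seq 1 (n - i))
           (fun j => C (n - i)%nat j / 4 ^ (n - i) * T i j t))).
  intros i _. apply (continuous_sumL _ (fun j t => C (n - i)%nat j / 4 ^ (n - i) * T i j t)).
  intros j _.
  apply (continuous_scal_r (K := R_AbsRing) (V := R_NormedModule) (C (n - i)%nat j / 4 ^ (n - i))).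
  auto.
Qed.

Lemma exp_pow x n : exp x ^ n = exp (INR n * x).
Proof.
  induction n; simpl pow; [simpl; rewrite Rmult_0_l, exp_0; auto|].
  rewrite IHn, <- exp_plus, S_INR. f_equal. ring.
Qed.

Lemma sqrt_exp v : sqrt (exp v) = exp (v / 2).
Proof.
  replace (exp v) with (exp (v / 2) * exp (v / 2)) by (rewrite <- exp_plus; f_equal; field).
  apply sqrt_square. left; apply exp_pos.
Qed.

(* From [v <= m exp (v/m)] with [m = 2j + 2], so that [j/m <= 1/2]. *)
Lemma ln_pow_le_sqrt j u : 1 <= u -> ln u ^ j <= (2 * INR j + 2) ^ j * sqrt u.
Proof.
  intros Hu. set (v := ln u). assert (Hv : 0 <= v) by (unfold v; rewrite <- ln_1; apply ln_le; lra).
  set (m := 2 * INR j + 2). pose proof (pos_INR j). assert (Hm : 0 < m) by (unfold m; lra).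
  assert (E1 : v <= m * exp (v / m)).
  { pose proof (exp_ineq1_le (v / m)) as Hexp.
    apply Rmult_le_compat_l with (r := m) in Hexp; [|lra].
    replace (m * (1 + v / m)) with (m + v) in Hexp by (field; lra). lra. }
  assert (E2 : v ^ j <= (m * exp (v / m)) ^ j) by (apply pow_incr; lra).
  rewrite Rpow_mult_distr, exp_pow in E2.
  assert (E3 : exp (INR j * (v / m)) <= exp (v / 2)).
  { assert (Hjm : INR j * (v / m) <= v / 2).
    { replace (INR j * (v / m)) with (v * (INR j / m)) by (field; lra).
      replace (v / 2) with (v * (1 / 2)) by field. apply Rmult_le_compat_l; auto.
      apply Rmult_le_reg_r with m; auto. unfold Rdiv. rewrite Rmult_assoc, Rinv_l by lra.
      unfold m; lra. }
    destruct Hjm as [Hlt|Heq]; [left; apply exp_increasing; auto|rewrite Heq; lra]. }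
  replace (sqrt u) with (exp (v / 2)) by (unfold v; rewrite <- sqrt_exp, exp_ln; lra).
  eapply Rle_trans; [apply E2|]. apply Rmult_le_compat_l; [apply pow_le; lra|]. auto.
Qed.

Lemma mul_ln_pow_le_sqrt j T t l : 0 < t <= T -> 0 <= l <= ln (T / t) ->
  t * l ^ j <= (2 * INR j + 2) ^ j * sqrt T * sqrt t.
Proof.
  intros Ht Hl. assert (H1 : 1 <= T / t).
  { apply Rmult_le_reg_r with t; [lra|]. unfold Rdiv. rewrite Rmult_assoc, Rinv_l by lra. lra. }
  pose proof (ln_pow_le_sqrt j (T / t) H1) as Hb.
  rewrite sqrt_div_alt in Hb by lra.
  pose proof (sqrt_lt_R0 t (proj1 Ht)).
  apply Rle_trans with (t * ((2 * INR j + 2) ^ j * (sqrt T / sqrt t))).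
  - apply Rmult_le_compat_l; [lra|]. eapply Rle_trans; [|exact Hb]. apply pow_incr; lra.
  - right. rewrite <- (sqrt_sqrt t) at 1 by lra. field. lra.
Qed.

Definition sqrt_bounded (Rr : R) (f : R -> R -> R) :=
  exists K, 0 <= K /\ forall a b, inT' Rr a b -> f a b <= K * sqrt (a - b).

Lemma F_sqrt_bounded Rr L i j : 0 <= L -> 0 < Rr -> sqrt_bounded Rr (F L i j).
Proof.
  intros HL HR.
  set (A := Fcoef L i * ((2 * Rr) ^ i * (2 * Rr) ^ i) * inv_fact j).
  set (c := (2 * INR j + 2) ^ j * sqrt (2 * Rr)).
  assert (HcA : 0 <= Fcoef L i).
  { unfold Fcoef. pose proof (INR_fact_lt_0 i). pose proof (INR_fact_lt_0 (i + 1)).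
    apply Rmult_le_pos; [apply pow_le; auto|left; apply Rinv_0_lt_compat, Rmult_lt_0_compat; auto]. }
  assert (HcX : 0 < inv_fact j) by (unfold inv_fact; apply Rinv_0_lt_compat, INR_fact_lt_0).
  assert (HRi : 0 <= (2 * Rr) ^ i) by (apply pow_le; lra).
  assert (HA : 0 <= A) by (unfold A; apply Rmult_le_pos; [apply Rmult_le_pos; [|apply Rmult_le_pos]|]; lra).
  assert (Hc : 0 <= c) by (unfold c; pose proof (pos_INR j);
                           apply Rmult_le_pos; [apply pow_le; lra|apply sqrt_pos]).
  exists (A * c); split; [apply Rmult_le_pos; auto|]. intros a b Hab. unfold inT' in Hab.
  destruct (Rlt_dec b a) as [Hlt|Hge].
  2: { rewrite F_on_diag by auto. replace (a - b) with 0 by lra. rewrite sqrt_0. lra. }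
  rewrite F_off_diag by auto. unfold Fterm.
  set (l := ln ((a + b) / (a - b))).
  assert (Hl : 0 <= l <= ln (2 * Rr / (a - b))).
  { split; [apply ln_ratio_ge0; lra|]. apply ln_le; [apply Rdiv_lt_0_compat; lra|].
    unfold Rdiv. apply Rmult_le_compat_r; [left; apply Rinv_0_lt_compat|]; lra. }
  pose proof (mul_ln_pow_le_sqrt j (2 * Rr) (a - b) l ltac:(lra) Hl) as Hlog.
  assert (Hab_i : 0 <= a ^ i * b ^ i <= (2 * Rr) ^ i * (2 * Rr) ^ i).
  { split; [apply Rmult_le_pos; apply pow_le; lra|].
    apply Rmult_le_compat; try apply pow_le; try lra; apply pow_incr; lra. }
  replace (Fcoef L i * a ^ i * b ^ i * (a - b) * l ^ j * inv_fact j)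
    with ((Fcoef L i * (a ^ i * b ^ i) * inv_fact j) * ((a - b) * l ^ j)) by ring.
  replace (A * c * sqrt (a - b)) with (A * (c * sqrt (a - b))) by ring.
  apply Rmult_le_compat.
  - apply Rmult_le_pos; [apply Rmult_le_pos|]; lra.
  - apply Rmult_le_pos; [lra|apply pow_le; lra].
  - unfold A. apply Rmult_le_compat_r; [lra|]. apply Rmult_le_compat_l; lra.
  - unfold c. lra.
Qed.

Lemma sqrt_bounded_plus Rr f g : sqrt_bounded Rr f -> sqrt_bounded Rr g ->
  sqrt_bounded Rr (fun a b => f a b + g a b).
Proof.
  intros [K1 [H1 P1]] [K2 [H2 P2]]. exists (K1 + K2); split; [lra|].
  intros. rewrite Rmult_plus_distr_r. pose proof (P1 a b H). pose proof (P2 a b H). lra.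
Qed.

Lemma sqrt_bounded_scal Rr c f : 0 <= c -> sqrt_bounded Rr f -> sqrt_bounded Rr (fun a b => c * f a b).
Proof.
  intros Hc [K [HK P]]. exists (c * K); split; [apply Rmult_le_pos; auto|].
  intros. rewrite Rmult_assoc. apply Rmult_le_compat_l; auto.
Qed.

Lemma sqrt_bounded_sumL Rr (l : list nat) (g : nat -> R -> R -> R) :
  (forall i, In i l -> sqrt_bounded Rr (g i)) ->
  sqrt_bounded Rr (fun a b => sumL l (fun i => g i a b)).
Proof.
  induction l as [|x l IH]; intros H.
  - exists 0. split; [lra|]. intros. unfold sumL; simpl. lra.
  - apply (sqrt_bounded_plus Rr (g x) (fun a b => sumL l (fun i => g i a b))).
    + apply H; left; auto.
    + apply IH; intros; apply H; right; auto.
Qed.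

Lemma sqrt_bounded_SumF Rr C n (T : nat -> nat -> R -> R -> R) : (forall i j, 0 <= C i j) ->
  (forall i j, sqrt_bounded Rr (T i j)) ->
  sqrt_bounded Rr (fun a b => SumF C (fun i j => T i j a b) n).
Proof.
  intros HC HT. unfold SumF, SumF_tail. apply (sqrt_bounded_plus Rr (T n 0%nat)); auto.
  apply (sqrt_bounded_sumL Rr _ (fun i a b => sumL (seq 1 (n - i))
           (fun j => C (n - i)%nat j / 4 ^ (n - i) * T i j a b))).
  intros i _. apply (sqrt_bounded_sumL Rr _ (fun j a b => C (n - i)%nat j / 4 ^ (n - i) * T i j a b)).
  intros j _. apply sqrt_bounded_scal; auto. unfold Rdiv. apply Rmult_le_pos; auto.
  left. apply Rinv_0_lt_compat, pow_lt; lra.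
Qed.

Definition Fsum C L n a b := SumF C (fun i j => F L i j a b) n.
Definition dFx_sum C L n x y := SumF C (fun i j => dFx L i j x y) n.

Lemma Fsum_off_diag C L n a b : b < a -> Fsum C L n a b = SumF C (fun i j => Fterm L i j a b) n.
Proof.
  intros H. unfold Fsum, SumF. rewrite F_off_diag by auto. f_equal.
  apply SumF_tail_ext. intros. apply F_off_diag; auto.
Qed.

Lemma dFx_sum_at_0 C L m x : 0 < x -> dFx_sum C L (S m) x 0 = 0.
Proof.
  intros Hx. unfold dFx_sum, SumF, SumF_tail. rewrite dFx_at_0 by (auto; lia).
  rewrite (sumL_ext _ _ (fun _ => 0)); [rewrite sumL_zero; ring|].
  intros i _. rewrite (sumL_ext _ _ (fun _ => 0)); [apply sumL_zero|].
  intros j Hj. apply in_seq in Hj. rewrite dFx_at_0 by (auto; lia). ring.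
Qed.

Section Majorant.

Variables (C : nat -> nat -> R) (L Rr : R) (m : nat).
Hypotheses (HC : is_catalan C) (HL : 0 <= L) (HR : 0 < Rr).

(* The inner integral of the majorant is the x-derivative of B_{m+1},
   because the mixed derivative of B_{m+1} is (L + K2) B_m. *)
Lemma Fsum_inner x b : inT' Rr x b -> b < x ->
  is_RInt (fun s => step_majorant L (Fsum C L m) x s) 0 b (dFx_sum C L (S m) x b).
Proof.
  intros Hxb Hb.
  assert (H0b : 0 <= b) by (unfold inT' in *; lra).
  assert (FT : is_RInt (fun s => SumF C (fun i j => dFxy L i j x s) (S m)) 0 b
                 (minus (dFx_sum C L (S m) x b) (dFx_sum C L (S m) x 0))).
  { apply (is_RInt_derive (V := R_CompleteNormedModule) (fun s => dFx_sum C L (S m) x s));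
      intros s Hs; rewrite Rmin_left, Rmax_right in Hs by lra.
    - apply (is_derive_SumF C (S m) (fun i j s => dFx L i j x s)).
      intros; apply is_derive_dFx_y; lra.
    - apply (continuous_SumF C (S m) (fun i j s => dFxy L i j x s)).
      intros; apply continuous_dFxy; lra. }
  rewrite dFx_sum_at_0 in FT by lra.
  replace (minus (dFx_sum C L (S m) x b) 0) with (dFx_sum C L (S m) x b) in FT
    by (unfold minus, plus, opp; simpl; ring).
  apply (is_RInt_ext _ _ _ _ _ ) with (2 := FT).
  intros s Hs. rewrite Rmin_left, Rmax_right in Hs by lra.
  rewrite (SumF_back_diff C L (K2_coef x s) (fun i j => Fterm L i j x s)) by (auto; reflexivity).
  unfold step_majorant. rewrite Fsum_off_diag by lra. reflexivity.
Qed.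

Lemma Fsum_outer a b c : inT' Rr a b -> b < c <= a ->
  is_RInt (fun x => dFx_sum C L (S m) x b) c a (Fsum C L (S m) a b - Fsum C L (S m) c b).
Proof.
  intros Hab Hc. rewrite !Fsum_off_diag by lra.
  apply (is_RInt_derive (V := R_CompleteNormedModule) (fun x => SumF C (fun i j => Fterm L i j x b) (S m)));
    intros x Hx; rewrite Rmin_left, Rmax_right in Hx by lra.
  - apply (is_derive_SumF C (S m) (fun i j x => Fterm L i j x b)).
    intros; apply is_derive_Fterm_x; unfold inT' in *; lra.
  - apply (continuous_SumF C (S m) (fun i j x => dFx L i j x b)).
    intros; apply continuous_dFx; unfold inT' in *; lra.
Qed.

Lemma Fsum_majorant : exists M,
  majorant Rr (step_majorant L (Fsum C L m)) (dFx_sum C L (S m)) (Fsum C L (S m)) (fun t => M * sqrt t).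
Proof.
  pose proof (catalan_ge0 C HC) as HCn.
  destruct (sqrt_bounded_SumF Rr C (S m) (fun i j => F L i j) HCn
              (fun i j => F_sqrt_bounded Rr L i j HL HR)) as [M [HM HMb]].
  exists M. split.
  - exact HR.
  - exact Fsum_inner.
  - exact Fsum_outer.
  - intros a b Hab. apply SumF_ge0; auto. intros; apply F_ge0; auto; unfold inT' in *; lra.
  - intros a b Hab. apply HMb; auto.
  - intros x y Hxy. apply Rmult_le_compat_l; auto. apply sqrt_le_1_alt; lra.
  - intros x Hx. apply Rmult_le_pos; auto; apply sqrt_pos.
  - intros e He. exists ((e / (M + 1)) ^ 2). split.
    + apply pow_lt, Rdiv_lt_0_compat; lra.
    + rewrite sqrt_pow2 by (left; apply Rdiv_lt_0_compat; lra).
      apply Rlt_le_trans with ((M + 1) * (e / (M + 1))).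
      * apply Rmult_lt_compat_r; [apply Rdiv_lt_0_compat|]; lra.
      * right; field; lra.
Qed.

End Majorant.

(** * The iterates G_n *)

Section FirstIterate.

Variables (eps Rr L : R) (lam : R -> R).
Hypotheses (HR : 0 < Rr) (Heps : 0 < eps) (Hlam : cont_on lam 0 Rr)
  (HL : forall r, 0 <= r <= Rr -> Rabs (lam r) / (4 * eps) <= L).

Let h r := lam r / (2 * eps).
Let prim v := RInt h 0 v.

Let h_ex u v : 0 <= u <= v -> v <= Rr -> ex_RInt h u v.
Proof.
  intros Huv Hv. apply cont_on_ex_RInt; [lra|]. intros x Hx e He.
  destruct (Hlam x ltac:(lra) (e * (2 * eps))) as [d [Hd P]].
  { apply Rmult_lt_0_compat; lra. }
  exists d; split; auto. intros y Hy Hyx. unfold h.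
  replace (lam y / (2 * eps) - lam x / (2 * eps)) with ((lam y - lam x) / (2 * eps)) by (field; lra).
  unfold Rdiv. rewrite Rabs_mult, Rabs_inv, (Rabs_right (2 * eps)) by lra.
  apply Rmult_lt_reg_r with (2 * eps); [lra|]. rewrite Rmult_assoc, Rinv_l, Rmult_1_r by lra.
  apply P; auto; lra.
Qed.

Let G0_prim a b : inT' Rr a b -> G eps lam 0 a b = - (prim (a / 2) - prim (b / 2)).
Proof.
  intros Hab. unfold inT' in Hab. simpl. fold h.
  rewrite RInt_Riemann_eq by (apply h_ex; lra).
  unfold prim. pose proof (RInt_ChaslesR h 0 (b / 2) (a / 2) ltac:(apply h_ex; lra) ltac:(apply h_ex; lra)).
  lra.
Qed.

Let prim_lip u v : 0 <= u <= Rr -> 0 <= v <= Rr -> Rabs (prim v - prim u) <= 2 * L * Rabs (v - u).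
Proof.
  assert (Hmono : forall p q, 0 <= p <= q -> q <= Rr -> Rabs (prim q - prim p) <= 2 * L * (q - p)).
  { intros p q Hpq Hq. unfold prim.
    pose proof (RInt_ChaslesR h 0 p q ltac:(apply h_ex; lra) ltac:(apply h_ex; lra)).
    replace (RInt h 0 q - RInt h 0 p) with (RInt h p q) by lra.
    rewrite Rmult_comm. apply abs_RInt_le_const; [lra|apply h_ex; lra|].
    intros r Hr. unfold h. specialize (HL r ltac:(lra)).
    replace (Rabs (lam r / (2 * eps))) with (2 * (Rabs (lam r) / (4 * eps))); [lra|].
    unfold Rdiv. rewrite Rabs_mult, Rabs_inv, (Rabs_right (2 * eps)) by lra. field; lra. }
  intros Hu Hv. destruct (Rle_dec u v).
  - rewrite (Rabs_right (v - u)) by lra. apply Hmono; lra.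
  - rewrite Rabs_minus_sym, (Rabs_left1 (v - u)) by lra.
    replace (- (v - u)) with (u - v) by ring. apply Hmono; lra.
Qed.

Let L_ge0 : 0 <= L.
Proof.
  eapply Rle_trans; [|apply (HL 0); lra].
  apply Rmult_le_pos; [apply Rabs_pos|left; apply Rinv_0_lt_compat; lra].
Qed.

Lemma G0_le_F a b : inT' Rr a b -> Rabs (G eps lam 0 a b) <= F L 0 0 a b.
Proof.
  intros Hab. rewrite G0_prim, Rabs_Ropp by auto. unfold inT' in Hab.
  eapply Rle_trans; [apply prim_lip; lra|]. rewrite Rabs_right by lra.
  destruct (Rlt_dec b a) as [Hlt|Hge].
  - unfold F. destruct Rlt_dec; [|lra]. simpl. right. field.
  - rewrite F_on_diag by auto. replace (a / 2 - b / 2) with 0 by lra. lra.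
Qed.

Lemma G0_uc : uc_on (inT' Rr) (G eps lam 0).
Proof.
  intros e He. exists (e / (2 * L + 2)). split; [apply Rdiv_lt_0_compat; lra|].
  intros a b a' b' Hp Hq Ha Hb. rewrite !G0_prim by auto. unfold inT' in Hp, Hq.
  replace (- (prim (a / 2) - prim (b / 2)) - - (prim (a' / 2) - prim (b' / 2))) with
    ((prim (a' / 2) - prim (a / 2)) - (prim (b' / 2) - prim (b / 2))) by ring.
  eapply Rle_lt_trans; [apply Rabs_triang|]. rewrite Rabs_Ropp.
  pose proof (prim_lip (a / 2) (a' / 2) ltac:(lra) ltac:(lra)) as Pa.
  pose proof (prim_lip (b / 2) (b' / 2) ltac:(lra) ltac:(lra)) as Pb.
  replace (a' / 2 - a / 2) with (- ((a - a') / 2)) in Pa by field.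
  replace (b' / 2 - b / 2) with (- ((b - b') / 2)) in Pb by field.
  rewrite Rabs_Ropp in Pa, Pb. unfold Rdiv in Pa, Pb.
  rewrite Rabs_mult, (Rabs_right (/ 2)) in Pa, Pb by lra.
  assert (Hsum : L * (Rabs (a - a') + Rabs (b - b')) < e).
  { apply Rle_lt_trans with (L * (2 * (e / (2 * L + 2)))).
    - apply Rmult_le_compat_l; lra.
    - replace (L * (2 * (e / (2 * L + 2)))) with (e * (2 * L / (2 * L + 2))) by (field; lra).
      rewrite <- (Rmult_1_r e) at 2. apply Rmult_lt_compat_l; auto.
      apply Rmult_lt_reg_r with (2 * L + 2); [lra|]. unfold Rdiv.
      rewrite Rmult_assoc, Rinv_l by lra. lra. }
  lra.
Qed.

Lemma G0_bounded : bounded_on (inT' Rr) (G eps lam 0).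
Proof.
  exists (2 * L * Rr). intros a b Hab. rewrite G0_prim, Rabs_Ropp by auto.
  unfold inT' in Hab. eapply Rle_trans; [apply prim_lip; lra|].
  apply Rmult_le_compat_l; [lra|]. unfold Rabs; destruct Rcase_abs; lra.
Qed.

End FirstIterate.

Lemma G_majorized eps Rr lam L C : 0 < eps -> 0 < Rr -> cont_on lam 0 Rr ->
  (forall rho, 0 <= rho <= Rr -> Rabs (lam rho) / (4 * eps) <= L) -> is_catalan C ->
  forall n, uc_on (inT' Rr) (G eps lam n) /\
    (forall a b, inT' Rr a b -> Rabs (G eps lam n a b) <= Fsum C L n a b) /\
    bounded_on (inT' Rr) (G eps lam n).
Proof.
  intros He HR Hc HL HC.
  assert (HL0 : 0 <= L).
  { eapply Rle_trans; [|apply (HL 0); lra].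
    apply Rmult_le_pos; [apply Rabs_pos|left; apply Rinv_0_lt_compat; lra]. }
  induction n as [|m [IHu [IHb IHd]]].
  - split; [|split]; [eapply G0_uc; eauto| |eapply G0_bounded; eauto].
    intros a b Hab. replace (Fsum C L 0 a b) with (F L 0 0 a b)
      by (unfold Fsum, SumF, SumF_tail, sumL; simpl; ring).
    eapply G0_le_F; eauto.
  - set (Phi := step_majorant L (Fsum C L m)).
    assert (D1 : dominated Rr Phi (K1 eps lam (G eps lam m))) by (eapply K1_dominated; eauto).
    assert (D2 : dominated Rr Phi (K2 (G eps lam m))) by (eapply K2_dominated; eauto).
    assert (D12 : dominated Rr Phi (fun x s => K1 eps lam (G eps lam m) x s + K2 (G eps lam m) x s))
      by (eapply K12_dominated; eauto).
    destruct (Fsum_majorant C L Rr m HC HL0 HR) as [M HK].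
    assert (EG : forall a b, inT' Rr a b -> G eps lam (S m) a b =
      dint (fun x s => K1 eps lam (G eps lam m) x s + K2 (G eps lam m) x s) a b)
      by (intros; symmetry; eapply dint_plus; eauto).
    split; [|split].
    + apply uc_on_ext with (dint (fun x s => K1 eps lam (G eps lam m) x s + K2 (G eps lam m) x s)).
      * intros; symmetry; auto.
      * eapply dint_uc; eauto.
    + intros a b Hab. rewrite EG by auto. eapply dint_le; eauto.
    + exists (M * sqrt (2 * Rr)). intros a b Hab. rewrite EG by auto.
      eapply Rle_trans; [eapply dint_le; eauto|].
      eapply Rle_trans; [apply (majorant_diag _ _ _ _ _ HK); auto|].
      apply (modulus_mono _ _ _ _ _ HK). unfold inT' in Hab; lra.
Qed.

Theorem lemma3 (eps Rr : R) (lam : R -> R) (lbar : R) (C : nat -> nat -> R) :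
  0 < eps -> 0 < Rr -> cont_on lam 0 Rr ->
  (exists rho, 0 <= rho <= Rr /\ lbar = Rabs (lam rho) / (4 * eps)) ->
  (forall rho, 0 <= rho <= Rr -> Rabs (lam rho) / (4 * eps) <= lbar) ->
  C 1%nat 1%nat = 1 ->
  (forall i, C i 0%nat = 0) ->
  (forall i j, (i < j)%nat -> C i j = 0) ->
  (forall i j, (2 <= i)%nat -> (1 <= j <= i)%nat ->
     C i j = C (i - 1)%nat (j - 1)%nat + C i (j + 1)%nat) ->
  (forall alpha beta, inT' Rr alpha beta ->
     Rabs (G eps lam 0 alpha beta) <= F lbar 0 0 alpha beta) /\
  (forall n : nat, (1 <= n)%nat -> forall alpha beta, inT' Rr alpha beta ->
     abs_conv (K1 eps lam (G eps lam (n - 1))) alpha beta /\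
     abs_conv (K2 (G eps lam (n - 1))) alpha beta /\
     Rabs (G eps lam n alpha beta)
       <= F lbar n 0 alpha beta
          + sumL (seq 0 n) (fun i =>
              sumL (seq 1 (n - i)) (fun j =>
                C (n - i)%nat j / 4 ^ (n - i) * F lbar i j alpha beta))).
Proof.
  intros He HR Hc _ HL C11 C0 Cz Cr.
  assert (HC : is_catalan C) by (repeat split; auto).
  assert (HL0 : 0 <= lbar).
  { eapply Rle_trans; [|apply (HL 0); lra].
    apply Rmult_le_pos; [apply Rabs_pos|left; apply Rinv_0_lt_compat; lra]. }
  pose proof (G_majorized eps Rr lam lbar C He HR Hc HL HC) as HG.
  split; [intros; eapply G0_le_F; eauto|].
  intros [|m] Hn a b Hab; [lia|]. replace (S m - 1)%nat with m by lia.
  destruct (HG m) as [Hu [Hb Hd]].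
  destruct (Fsum_majorant C lbar Rr m HC HL0 HR) as [M HK].
  split; [|split].
  - eapply dominated_abs_conv; eauto. eapply K1_dominated; eauto.
  - eapply dominated_abs_conv; eauto. eapply K2_dominated; eauto.
  - apply (proj1 (proj2 (HG (S m)))); auto.
Qed.
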